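(* Let $k$ be a positive integer and let $f\in H^{k,2}$ be such that $M_{f^{(k)}}(1)\leq 1$. Then, for every $0<r<1$, $$\|f\|_2\leq\sum_{s=0}^{k-1}\frac{(1-r)^s}{s!}M_{f^{(s)}}(r)+\left[\frac{\log r}{\log M_{f^{(k)}}(r)}\right]^k.$$
   Context: $\mathbb D$ is the open unit disk. $H^2$ is the Hardy space of $\mathbb D$, $\|f\|_2=\left(\frac{1}{2\pi}\int_0^{2\pi}|f(e^{i\theta})|^2d\theta\right)^{1/2}$ on boundary values, and $H^{k,2}=\{f\in H^2: f^{(j)}\in H^2,\ j=1,\dots,k\}$ (derivatives with respect to $z$). For $g$ analytic in $\mathbb D$ and $0<r<1$, $M_g(r)=\left(\frac{1}{2\pi}\int_0^{2\pi}|g(re^{i\theta})|^2d\theta\right)^{1/2}$, and $M_g(1)=\lim_{r\to1}M_g(r)=\sup_{r<1}M_g(r)$. *)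

From Stdlib Require Import Reals.
From Coquelicot Require Import Coquelicot.
Open Scope R_scope.

Definition Mmean2 (g : C -> C) (r : R) : R :=
  sqrt (/ (2 * PI) * RInt (fun t => (Cmod (g (r * cos t, r * sin t)%R)) ^ 2) 0 (2 * PI)).

Definition Mradial1 (g : C -> C) : Rbar :=
  Lub_Rbar (fun x => exists r, 0 <= r < 1 /\ x = Mmean2 g r).

Definition holo_disk (g : C -> C) : Prop :=
  forall z : C, Cmod z < 1 -> ex_derive (K := C_AbsRing) (V := C_NormedModule) g z.

Definition in_H2 (g : C -> C) : Prop :=
  holo_disk g /\ Rbar_lt (Mradial1 g) p_infty.

(* ||g||_2 = M_g(1) (boundary L^2 norm, for g in H^2) *)
Definition H2norm (g : C -> C) : R := real (Mradial1 g).

Definition derivs_on_disk (f : C -> C) (F : nat -> C -> C) : Prop :=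
  (forall z : C, Cmod z < 1 -> F O z = f z) /\
  (forall (j : nat) (z : C), Cmod z < 1 ->
     is_derive (K := C_AbsRing) (V := C_NormedModule) (F j) z (F (S j) z)).

Definition in_Hk2 (k : nat) (f : C -> C) (F : nat -> C -> C) : Prop :=
  derivs_on_disk f F /\ forall j : nat, (j <= k)%nat -> in_H2 (F j).

(* [log r / log m]^k, with the convention log 0 = -oo, i.e. the term is 0 when m = 0 *)
Definition log_term (k : nat) (r m : R) : R :=
  if Req_EM_T m 0 then 0 else (ln r / ln m) ^ k.

(* Write M_s(t) for the quadratic mean of F s on the circle of radius t. By Hardy's
   convexity theorem, log M_s is a convex function of log t: for u = 2 pi M_s^2 one has
   (t u')' = 4 t u_1 with u_1 the energy of F (s+1), while Cauchy-Schwarz gives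
   (t u')^2 <= 4 t^2 u u_1, so t u' / u is nondecreasing.  Since M_k <= 1, this yields
   M_k(t) <= M_k(r)^(log t / log r) <= e^(-a (rho - t)) for r <= t <= rho < 1, where
   a = log M_k(r) / log r.  Along each ray, Taylor's formula with integral remainder and
   Minkowski's inequality give
     M_0(rho) <= sum_(s<k) (rho - r)^s / s! M_s(r) + int_r^rho (rho - t)^(k-1)/(k-1)! M_k(t) dt,
   and the last integral is at most a^(-k) = (log r / log M_k(r))^k.  For rho <= r one uses
   instead that M_0 is nondecreasing; finally ||f||_2 is the supremum of M_0(rho). *)

From Stdlib Require Import Reals Lra Psatz.
From Coquelicot Require Import Coquelicot.
Open Scope R_scope.

Lemma is_derive_from_estimate (f : R -> R) x l :
  (forall eps : posreal, exists d : posreal, forall y, Rabs (y - x) < d ->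
     Rabs (f y - f x - (y - x) * l) <= eps * Rabs (y - x)) ->
  is_derive f x l.
Proof.
  intros H. split.
  - apply is_linear_scal_l.
  - intros y Hy.
    assert (E : x = y) by
      (apply (is_filter_lim_locally_unique (K:=R_AbsRing) (V:=AbsRing_NormedModule R_AbsRing));
       exact Hy).
    subst y. intros eps. destruct (H eps) as [d Hd]. exists d. exact Hd.
Qed.

Lemma is_derive_estimate (f : R -> R) x l :
  is_derive f x l ->
  forall eps : posreal, exists d : posreal, forall y, Rabs (y - x) < d ->
     Rabs (f y - f x - (y - x) * l) <= eps * Rabs (y - x).
Proof.
  intros [_ H] eps. destruct (H x (fun P HP => HP) eps) as [d Hd].
  exists d. exact Hd.
Qed.

Lemma le_of_is_derive_nonneg (f df : R -> R) a b : a <= b ->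
  (forall x, a <= x <= b -> is_derive f x (df x)) ->
  (forall x, a <= x <= b -> 0 <= df x) -> f a <= f b.
Proof.
  intros Hab Hd Hp.
  destruct (MVT_gen f a b df) as [c [Hc E]].
  - intros x Hx. rewrite Rmin_left, Rmax_right in Hx by lra. apply Hd. lra.
  - intros x Hx. rewrite Rmin_left, Rmax_right in Hx by lra.
    apply continuity_pt_filterlim.
    apply (ex_derive_continuous (K:=R_AbsRing) (V:=R_NormedModule)).
    eexists. apply Hd. lra.
  - rewrite Rmin_left, Rmax_right in Hc by lra.
    assert (0 <= df c) by (apply Hp; lra). nra.
Qed.

Lemma le_of_le_plus_eps_mult A B K : 0 <= K ->
  (forall e, 0 < e -> A <= B + e * K) -> A <= B.
Proof.
  intros HK H. apply Rle_plus_epsilon. intros eps Heps.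
  specialize (H (eps / (K + 1)) ltac:(apply Rdiv_lt_0_compat; lra)).
  assert (eps / (K + 1) * K <= eps).
  { apply Rmult_le_reg_r with (K + 1). lra. field_simplify; nra. }
  lra.
Qed.

Lemma ln_le_sub_1 x : 0 < x -> ln x <= x - 1.
Proof. intros Hx. pose proof (exp_ineq1_le (ln x)). rewrite exp_ln in H; lra. Qed.

Lemma ln_plus_le x e : 0 < x -> 0 <= e -> ln (x + e) <= ln x + e / x.
Proof.
  intros Hx He. replace (ln (x + e)) with (ln x + ln ((x + e) / x))
    by (rewrite ln_div by lra; ring).
  pose proof (ln_le_sub_1 ((x + e) / x) ltac:(apply Rdiv_lt_0_compat; lra)).
  replace ((x + e) / x - 1) with (e / x) in H by (field; lra). lra.
Qed.

Lemma ln_neg x : 0 < x < 1 -> ln x < 0.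
Proof. intros Hx. rewrite <- ln_1. apply ln_increasing; lra. Qed.

Lemma exp_le x y : x <= y -> exp x <= exp y.
Proof. intros [H|H]; [left; apply exp_increasing; auto | subst; lra]. Qed.

Lemma ln_sqrt x : 0 < x -> ln (sqrt x) = / 2 * ln x.
Proof.
  intros Hx. assert (Hs : 0 < sqrt x) by (apply sqrt_lt_R0; auto).
  rewrite <- (sqrt_sqrt x) at 2 by lra. rewrite ln_mult by auto. field.
Qed.

Lemma sqrt_plus_sq_le a e : 0 <= a -> 0 <= e -> sqrt (a + e ^ 2) <= sqrt a + e.
Proof.
  intros Ha He. rewrite <- (sqrt_pow2 (sqrt a + e)) by (pose proof (sqrt_pos a); lra).
  apply sqrt_le_1_alt. pose proof (sqrt_pos a).
  replace ((sqrt a + e) ^ 2) with (sqrt a * sqrt a + 2 * sqrt a * e + e ^ 2) by ring.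
  rewrite sqrt_sqrt by lra. nra.
Qed.

Lemma discriminant_le A B C : 0 <= C ->
  (forall l, 0 <= A - 2 * l * B + l * l * C) -> B * B <= A * C.
Proof.
  intros HC H. destruct (Req_dec C 0) as [E|E].
  - subst C. destruct (Req_dec B 0) as [EB|EB]; [subst B; nra|].
    exfalso. specialize (H ((A + 1) / (2 * B))).
    replace (A - 2 * ((A + 1) / (2 * B)) * B + (A + 1) / (2 * B) * ((A + 1) / (2 * B)) * 0)
      with (-1) in H by (field; auto). lra.
  - specialize (H (B / C)).
    replace (A - 2 * (B / C) * B + B / C * (B / C) * C) with ((A * C - B * B) / C) in H
      by (field; auto).
    apply Rmult_le_compat_r with (r := C) in H; [|lra].
    unfold Rdiv in H. rewrite Rmult_assoc, Rinv_l in H by lra. lra.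
Qed.

Lemma PI2_gt0 : 0 < 2 * PI.
Proof. pose proof PI_RGT_0; lra. Qed.

Lemma cos2_sin2 (t : R) : cos t ^ 2 + sin t ^ 2 = 1.
Proof. rewrite <- (sin2_cos2 t). unfold Rsqr. ring. Qed.

Lemma sum_f_R0_ge_first (f : nat -> R) N : (forall s, 0 <= f s) -> f 0%nat <= sum_f_R0 f N.
Proof. intros H. induction N as [|N IH]; simpl; [lra|]. pose proof (H (S N)). lra. Qed.

Lemma is_derive_eq (f : R -> R) (x l1 l2 : R) : is_derive f x l1 -> l1 = l2 -> is_derive f x l2.
Proof. intros H E; subst; exact H. Qed.

Lemma is_derive_Rconst (c x : R) : is_derive (fun _ => c) x 0.
Proof. apply (is_derive_const (K:=R_AbsRing) (V:=R_NormedModule)). Qed.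

Lemma is_derive_Rid (x : R) : is_derive (fun t => t) x 1.
Proof. apply (is_derive_id (K:=R_AbsRing)). Qed.

Lemma is_derive_Rplus (f g : R -> R) (x df dg : R) : is_derive f x df -> is_derive g x dg ->
  is_derive (fun t => f t + g t) x (df + dg).
Proof. intros. apply (is_derive_plus f g x df dg); auto. Qed.

Lemma is_derive_Rminus (f g : R -> R) (x df dg : R) : is_derive f x df -> is_derive g x dg ->
  is_derive (fun t => f t - g t) x (df - dg).
Proof. intros. apply (is_derive_minus f g x df dg); auto. Qed.

Lemma is_derive_Ropp (f : R -> R) (x df : R) : is_derive f x df ->
  is_derive (fun t => - f t) x (- df).
Proof. intros. apply (is_derive_opp f x df); auto. Qed.

Lemma is_derive_Rmult (f g : R -> R) (x df dg : R) : is_derive f x df -> is_derive g x dg ->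
  is_derive (fun t => f t * g t) x (df * g x + f x * dg).
Proof. intros. apply (is_derive_mult f g x df dg); auto. intros; apply Rmult_comm. Qed.

Lemma is_derive_Rdiv_const (f : R -> R) (c x df : R) : is_derive f x df ->
  is_derive (fun t => f t / c) x (df / c).
Proof.
  intros H. eapply is_derive_eq. apply (is_derive_Rmult f (fun _ => / c)). exact H.
  apply is_derive_Rconst. unfold Rdiv. ring.
Qed.

Lemma is_derive_Rln (f : R -> R) (x df : R) : is_derive f x df -> 0 < f x ->
  is_derive (fun t => ln (f t)) x (df / f x).
Proof.
  intros H Hp. eapply is_derive_eq. apply (is_derive_comp ln f x (/ f x) df).
  apply is_derive_ln; auto. exact H. reflexivity.
Qed.

Lemma is_derive_Rexp (f : R -> R) (x df : R) : is_derive f x df ->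
  is_derive (fun t => exp (f t)) x (exp (f x) * df).
Proof.
  intros H. eapply is_derive_eq. apply (is_derive_comp exp f x (exp (f x)) df).
  apply is_derive_exp. exact H. apply Rmult_comm.
Qed.

Lemma is_derive_cos' (x : R) : is_derive (fun t => cos t) x (- sin x).
Proof. apply is_derive_Reals. apply derivable_pt_lim_cos. Qed.

Lemma is_derive_sin' (x : R) : is_derive (fun t => sin t) x (cos x).
Proof. apply is_derive_Reals. apply derivable_pt_lim_sin. Qed.

(* Unlike [auto_derive], this leaves derivatives of abstract functions as
   hypotheses to be matched instead of [Derive] terms. *)
Ltac derive_step := match goal with
  | |- is_derive (fun _ => ?c) _ _ => apply is_derive_Rconst
  | |- is_derive (fun t => t) _ _ => apply is_derive_Rid
  | |- is_derive (fun t => cos t) _ _ => apply is_derive_cos'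
  | |- is_derive (fun t => sin t) _ _ => apply is_derive_sin'
  | |- is_derive (fun t => exp (@?f t)) _ _ => apply (is_derive_Rexp f)
  | |- is_derive (fun t => @?f t ^ ?n) _ _ => apply (is_derive_pow f n)
  | |- is_derive (fun t => @?f t / ?c) _ _ => apply (is_derive_Rdiv_const f c)
  | |- is_derive (fun t => @?f t + @?g t) _ _ => apply (is_derive_Rplus f g)
  | |- is_derive (fun t => @?f t - @?g t) _ _ => apply (is_derive_Rminus f g)
  | |- is_derive (fun t => - @?f t) _ _ => apply (is_derive_Ropp f)
  | |- is_derive (fun t => @?f t * @?g t) _ _ => apply (is_derive_Rmult f g)
  | |- is_derive _ _ _ => eassumption
  end.

Lemma continuity_2d_pt_comp1 (g : R -> R) (f : R -> R -> R) x y :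
  (forall z, continuity_pt g z) -> continuity_2d_pt f x y ->
  continuity_2d_pt (fun u v => g (f u v)) x y.
Proof. intros Hg Hf. apply (continuity_1d_2d_pt_comp g f); auto. Qed.

Lemma continuity_2d_pt_pow (f : R -> R -> R) n x y : continuity_2d_pt f x y ->
  continuity_2d_pt (fun u v => f u v ^ n) x y.
Proof.
  intros H. induction n as [|n IH].
  - apply continuity_2d_pt_ext with (fun _ _ => 1); [reflexivity|].
    apply continuity_2d_pt_const.
  - apply continuity_2d_pt_ext with (fun u v => f u v * f u v ^ n).
    intros; simpl; ring. apply continuity_2d_pt_mult; auto.
Qed.

Lemma continuity_2d_pt_div_const (f : R -> R -> R) c x y : continuity_2d_pt f x y ->
  continuity_2d_pt (fun u v => f u v / c) x y.
Proof. intros H. apply continuity_2d_pt_mult; auto. apply continuity_2d_pt_const. Qed.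

Ltac continuity_2d_step := match goal with
  | |- continuity_2d_pt (fun _ _ => ?c) _ _ => apply continuity_2d_pt_const
  | |- continuity_2d_pt (fun u _ => u) _ _ => apply continuity_2d_pt_id1
  | |- continuity_2d_pt (fun _ v => v) _ _ => apply continuity_2d_pt_id2
  | |- continuity_2d_pt (fun u v => cos (@?f u v)) _ _ =>
      apply (continuity_2d_pt_comp1 cos f); [apply continuity_cos|]
  | |- continuity_2d_pt (fun u v => sin (@?f u v)) _ _ =>
      apply (continuity_2d_pt_comp1 sin f); [apply continuity_sin|]
  | |- continuity_2d_pt (fun u v => @?f u v ^ ?n) _ _ => apply (continuity_2d_pt_pow f n)
  | |- continuity_2d_pt (fun u v => @?f u v / ?c) _ _ => apply (continuity_2d_pt_div_const f c)
  | |- continuity_2d_pt (fun u v => @?f u v + @?g u v) _ _ => apply (continuity_2d_pt_plus f g)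
  | |- continuity_2d_pt (fun u v => @?f u v - @?g u v) _ _ => apply (continuity_2d_pt_minus f g)
  | |- continuity_2d_pt (fun u v => - @?f u v) _ _ => apply (continuity_2d_pt_opp f)
  | |- continuity_2d_pt (fun u v => @?f u v * @?g u v) _ _ => apply (continuity_2d_pt_mult f g)
  | |- continuity_2d_pt _ _ _ => assumption
  end.

Lemma continuity_pt_of_2d_snd (f : R -> R -> R) x y :
  continuity_2d_pt f x y -> continuity_pt (fun v => f x v) y.
Proof.
  intros H eps Heps. destruct (H (mkposreal _ Heps)) as [d Hd].
  exists d. split; [apply cond_pos|]. intros v [_ Hv]. simpl in Hv |- *. unfold R_dist in *.
  apply Hd; [rewrite Rminus_eq_0, Rabs_R0; apply cond_pos | exact Hv].
Qed.

Lemma ex_RInt_of_continuity_2d (f : R -> R -> R) x a b :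
  (forall t, Rmin a b <= t <= Rmax a b -> continuity_2d_pt f x t) ->
  ex_RInt (f x) a b.
Proof.
  intros H. apply (ex_RInt_continuous (V:=R_CompleteNormedModule)). intros z Hz.
  apply continuity_pt_filterlim. apply (continuity_pt_of_2d_snd f x z). auto.
Qed.

Lemma is_derive_RInt_param_open (f g : R -> R -> R) a b lo hi x :
  lo < x < hi ->
  (forall u t, lo < u < hi -> is_derive (fun u => f u t) u (g u t)) ->
  (forall u t, lo < u < hi -> continuity_2d_pt f u t) ->
  (forall u t, lo < u < hi -> continuity_2d_pt g u t) ->
  is_derive (fun u => RInt (f u) a b) x (RInt (g x) a b).
Proof.
  intros Hx Hd Hf Hg.
  assert (Hp : 0 < Rmin (x - lo) (hi - x)) by (apply Rmin_glb_lt; lra).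
  pose proof (Rmin_l (x - lo) (hi - x)). pose proof (Rmin_r (x - lo) (hi - x)).
  assert (Hloc : locally x (fun y => lo < y < hi)).
  { exists (mkposreal _ Hp). intros y Hy.
    apply Rabs_lt_between' in Hy. simpl in Hy. lra. }
  replace (RInt (g x) a b) with (RInt (fun t => Derive (fun u => f u t) x) a b).
  2: { apply RInt_ext. intros t _. apply is_derive_unique. auto. }
  apply (is_derive_RInt_param (fun u t => f u t)).
  - revert Hloc. apply filter_imp. intros y Hy t _. eexists. apply Hd. exact Hy.
  - intros t _. apply continuity_2d_pt_ext_loc with g; [|auto].
    exists (mkposreal _ Hp). intros u v Hu _. simpl in Hu.
    apply Rabs_lt_between' in Hu.
    symmetry. apply is_derive_unique. apply Hd. lra.
  - revert Hloc. apply filter_imp. intros y Hy.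
    apply ex_RInt_of_continuity_2d. auto.
Qed.

Lemma RInt_plus_scal (F X : R -> R) c a b :
  ex_RInt F a b -> ex_RInt X a b ->
  ex_RInt (fun t => F t + c * X t) a b /\
  RInt (fun t => F t + c * X t) a b = RInt F a b + c * RInt X a b.
Proof.
  intros HF HX.
  assert (HcX : ex_RInt (fun t => c * X t) a b)
    by (apply (ex_RInt_scal (V:=R_CompleteNormedModule)); exact HX).
  split; [apply (ex_RInt_plus (V:=R_CompleteNormedModule)); auto|].
  rewrite (RInt_plus (V:=R_CompleteNormedModule) F (fun t => c * X t)) by auto.
  change (RInt F a b + RInt (fun t => c * X t) a b = RInt F a b + c * RInt X a b).
  f_equal. exact (RInt_scal (V:=R_CompleteNormedModule) X a b c HX).
Qed.

Lemma RInt_scal_R (f : R -> R) c a b : ex_RInt f a b ->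
  RInt (fun t => c * f t) a b = c * RInt f a b.
Proof. intros H. exact (RInt_scal (V:=R_CompleteNormedModule) f a b c H). Qed.

Lemma RInt_Cauchy_Schwarz (f1 f2 g1 g2 : R -> R) a b : a <= b ->
  ex_RInt (fun t => f1 t ^ 2 + f2 t ^ 2) a b ->
  ex_RInt (fun t => g1 t ^ 2 + g2 t ^ 2) a b ->
  ex_RInt (fun t => f1 t * g1 t + f2 t * g2 t) a b ->
  (RInt (fun t => f1 t * g1 t + f2 t * g2 t) a b) ^ 2 <=
  RInt (fun t => f1 t ^ 2 + f2 t ^ 2) a b * RInt (fun t => g1 t ^ 2 + g2 t ^ 2) a b.
Proof.
  intros Hab HF HG HX.
  set (F := fun t => f1 t ^ 2 + f2 t ^ 2) in *.
  set (X := fun t => f1 t * g1 t + f2 t * g2 t) in *.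
  set (Gq := fun t => g1 t ^ 2 + g2 t ^ 2) in *.
  assert (HC : 0 <= RInt Gq a b) by (apply RInt_ge_0; auto; intros; unfold Gq; nra).
  simpl. rewrite Rmult_1_r. apply discriminant_le; [exact HC|]. intros l.
  destruct (RInt_plus_scal F X (- 2 * l) a b HF HX) as [H1 E1].
  destruct (RInt_plus_scal _ Gq (l * l) a b H1 HG) as [H2 E2].
  replace (RInt F a b - 2 * l * RInt X a b + l * l * RInt Gq a b)
    with (RInt (fun t => F t + - 2 * l * X t + l * l * Gq t) a b) by (rewrite E2, E1; lra).
  apply RInt_ge_0; auto. intros x _. unfold F, X, Gq.
  pose proof (pow2_ge_0 (f1 x - l * g1 x)); pose proof (pow2_ge_0 (f2 x - l * g2 x)). nra.
Qed.

(** * Holomorphic functions along curves *)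

Definition is_derive_on_disk (G G' : C -> C) := forall z, Cmod z < 1 ->
  is_derive (K:=C_AbsRing) (V:=C_NormedModule) G z (G' z).

Lemma is_derive_on_disk_estimate G G' z : is_derive_on_disk G G' -> Cmod z < 1 ->
  forall eps : posreal, exists d : posreal, forall w, Cmod (w - z) < d ->
    Cmod (G w - G z - (w - z) * G' z) <= eps * Cmod (w - z).
Proof.
  intros H Hz eps. destruct (H z Hz) as [_ H2].
  destruct (H2 z (fun P HP => HP) eps) as [d Hd]. exists d. exact Hd.
Qed.

Lemma Rabs_fst_le_Cmod (x : C) : Rabs (fst x) <= Cmod x.
Proof. eapply Rle_trans; [apply Rmax_l | apply Rmax_Cmod]. Qed.

Lemma Rabs_snd_le_Cmod (x : C) : Rabs (snd x) <= Cmod x.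
Proof. eapply Rle_trans; [apply Rmax_r | apply Rmax_Cmod]. Qed.

Lemma Cmod_le_Rabs_fst_snd (x : C) : Cmod x <= Rabs (fst x) + Rabs (snd x).
Proof.
  pose proof (Rabs_pos (fst x)); pose proof (Rabs_pos (snd x)).
  unfold Cmod. rewrite <- (sqrt_Rsqr (Rabs (fst x) + Rabs (snd x))) by lra.
  apply sqrt_le_1_alt. unfold Rsqr. simpl. rewrite !Rmult_1_r.
  rewrite <- (Rabs_right (fst x * fst x)), <- (Rabs_right (snd x * snd x)), !Rabs_mult
    by nra.
  nra.
Qed.

Definition has_curve_deriv (g : R -> C) (t : R) (w : C) : Prop :=
  forall eps : posreal, exists d : posreal, forall y, Rabs (y - t) < d ->
    Cmod (g y - g t - RtoC (y - t) * w) <= eps * Rabs (y - t).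

Lemma has_curve_deriv_of_components (g : R -> C) t a b :
  is_derive (fun s => fst (g s)) t a -> is_derive (fun s => snd (g s)) t b ->
  has_curve_deriv g t (a, b).
Proof.
  intros Ha Hb eps.
  assert (He : 0 < eps / 2) by (pose proof (cond_pos eps); lra).
  destruct (is_derive_estimate _ _ _ Ha (mkposreal _ He)) as [d1 Hd1].
  destruct (is_derive_estimate _ _ _ Hb (mkposreal _ He)) as [d2 Hd2].
  exists (mkposreal _ (Rmin_glb_lt _ _ _ (cond_pos d1) (cond_pos d2))). simpl.
  intros y Hy. pose proof (Rmin_l d1 d2). pose proof (Rmin_r d1 d2).
  specialize (Hd1 y ltac:(lra)). specialize (Hd2 y ltac:(lra)). simpl in Hd1, Hd2.
  eapply Rle_trans; [apply Cmod_le_Rabs_fst_snd|]. simpl.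
  replace (fst (g y) + - fst (g t) + - ((y - t) * a - 0 * b))
    with (fst (g y) - fst (g t) - (y - t) * a) by ring.
  replace (snd (g y) + - snd (g t) + - ((y - t) * b + 0 * a))
    with (snd (g y) - snd (g t) - (y - t) * b) by ring.
  lra.
Qed.

Lemma components_of_has_curve_deriv (g : R -> C) t w : has_curve_deriv g t w ->
  is_derive (fun s => fst (g s)) t (fst w) /\ is_derive (fun s => snd (g s)) t (snd w).
Proof.
  intros H. split; apply is_derive_from_estimate; intros eps;
    destruct (H eps) as [d Hd]; exists d; intros y Hy;
    (eapply Rle_trans; [|exact (Hd y Hy)]).
  - eapply Rle_trans; [|apply Rabs_fst_le_Cmod]. simpl. right. f_equal. ring.
  - eapply Rle_trans; [|apply Rabs_snd_le_Cmod]. simpl. right. f_equal. ring.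
Qed.

Lemma has_curve_deriv_comp (G G' : C -> C) (g : R -> C) t w :
  is_derive_on_disk G G' -> Cmod (g t) < 1 -> has_curve_deriv g t w ->
  has_curve_deriv (fun s => G (g s)) t (w * G' (g t)).
Proof.
  intros HG Hz Hg eps.
  set (z := g t) in *. set (l := G' z).
  set (K := Cmod w + 1 + Cmod l).
  assert (HK : 1 <= K) by (unfold K; pose proof (Cmod_ge_0 w); pose proof (Cmod_ge_0 l); lra).
  assert (Heta : 0 < Rmin 1 (eps / K))
    by (apply Rmin_glb_lt; [lra | apply Rdiv_lt_0_compat; [apply cond_pos | lra]]).
  set (eta := mkposreal _ Heta).
  assert (Heta1 : eta <= 1) by apply Rmin_l.
  assert (HetaK : eta * K <= eps).
  { apply Rle_trans with (eps / K * K); [apply Rmult_le_compat_r; [lra | apply Rmin_r]|].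
    right. field. lra. }
  destruct (is_derive_on_disk_estimate G G' z HG Hz eta) as [d1 Hd1].
  destruct (Hg eta) as [d2 Hd2].
  assert (Hd : 0 < Rmin d2 (d1 / (Cmod w + 1))).
  { apply Rmin_glb_lt; [apply cond_pos|].
    apply Rdiv_lt_0_compat; [apply cond_pos | pose proof (Cmod_ge_0 w); lra]. }
  exists (mkposreal _ Hd). intros y Hy. simpl in Hy.
  pose proof (Rmin_l d2 (d1 / (Cmod w + 1))). pose proof (Rmin_r d2 (d1 / (Cmod w + 1))).
  specialize (Hd2 y ltac:(lra)). fold z in Hd2.
  set (h := y - t) in *. pose proof (Rabs_pos h). pose proof (Cmod_ge_0 l).
  assert (Hmove : Cmod (g y - z) <= Rabs h * (Cmod w + 1)).
  { replace (g y - z)%C with ((g y - z - RtoC h * w) + RtoC h * w)%C by ring.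
    eapply Rle_trans; [apply Cmod_triangle|]. rewrite Cmod_mult, Cmod_R.
    pose proof (cond_pos eta). nra. }
  assert (Hclose : Cmod (g y - z) < d1).
  { eapply Rle_lt_trans; [exact Hmove|].
    pose proof (Cmod_ge_0 w).
    apply Rlt_le_trans with (d1 / (Cmod w + 1) * (Cmod w + 1)); [apply Rmult_lt_compat_r; lra|].
    right. field. lra. }
  specialize (Hd1 (g y) Hclose). fold l in Hd1.
  replace (G (g y) - G z - RtoC h * (w * l))%C
    with ((G (g y) - G z - (g y - z) * l) + (g y - z - RtoC h * w) * l)%C by ring.
  eapply Rle_trans; [apply Cmod_triangle|]. rewrite Cmod_mult.
  apply Rle_trans with (eta * (Rabs h * (Cmod w + 1)) + eta * Rabs h * Cmod l).
  - apply Rplus_le_compat; [|apply Rmult_le_compat_r; auto].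
    eapply Rle_trans; [exact Hd1|]. apply Rmult_le_compat_l; [apply Rlt_le, cond_pos | exact Hmove].
  - apply Rle_trans with (eta * K * Rabs h); [unfold K; right; ring|].
    apply Rmult_le_compat_r; auto.
Qed.

Definition polar (r t : R) : C := (r * cos t, r * sin t).

Lemma Cmod_polar r t : Cmod (polar r t) = Rabs r.
Proof.
  unfold Cmod, polar. simpl. rewrite <- sqrt_Rsqr_abs. f_equal. unfold Rsqr.
  transitivity (r * r * (cos t ^ 2 + sin t ^ 2)); [simpl; ring|].
  rewrite cos2_sin2. ring.
Qed.

Lemma polar_2PI r : polar r (2 * PI) = polar r 0.
Proof. unfold polar. rewrite cos_2PI, sin_2PI, cos_0, sin_0. reflexivity. Qed.

Lemma is_derive_polar_radius (G G' : C -> C) x th :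
  is_derive_on_disk G G' -> Rabs x < 1 ->
  is_derive (fun u => fst (G (polar u th))) x (fst (Cmult (cos th, sin th) (G' (polar x th)))) /\
  is_derive (fun u => snd (G (polar u th))) x (snd (Cmult (cos th, sin th) (G' (polar x th)))).
Proof.
  intros HG Hx. apply components_of_has_curve_deriv.
  apply (has_curve_deriv_comp G G' (fun u => polar u th)); [exact HG | rewrite Cmod_polar; exact Hx|].
  apply has_curve_deriv_of_components; unfold polar; simpl; auto_derive; auto; ring.
Qed.

Lemma is_derive_polar_angle (G G' : C -> C) r th :
  is_derive_on_disk G G' -> Rabs r < 1 ->
  is_derive (fun v => fst (G (polar r v))) th
    (fst (Cmult (- r * sin th, r * cos th) (G' (polar r th)))) /\
  is_derive (fun v => snd (G (polar r v))) th
    (snd (Cmult (- r * sin th, r * cos th) (G' (polar r th)))).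
Proof.
  intros HG Hr. apply components_of_has_curve_deriv.
  apply (has_curve_deriv_comp G G' (fun v => polar r v)); [exact HG | rewrite Cmod_polar; exact Hr|].
  apply has_curve_deriv_of_components; unfold polar; simpl; auto_derive; auto; ring.
Qed.

Lemma is_derive_on_disk_lipschitz_at G G' z : is_derive_on_disk G G' -> Cmod z < 1 ->
  exists d : posreal, forall w, Cmod (w - z) < d ->
    Cmod (G w - G z) <= (Cmod (G' z) + 1) * Cmod (w - z).
Proof.
  intros HG Hz. destruct (is_derive_on_disk_estimate G G' z HG Hz (mkposreal 1 Rlt_0_1)) as [d Hd].
  exists d. intros w Hw. specialize (Hd w Hw). simpl in Hd.
  replace (G w - G z)%C with ((G w - G z - (w - z) * G' z) + (w - z) * G' z)%C by ring.
  eapply Rle_trans; [apply Cmod_triangle|]. rewrite Cmod_mult. lra.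
Qed.

Lemma continuity_2d_polar (G G' : C -> C) x y : is_derive_on_disk G G' -> Rabs x < 1 ->
  continuity_2d_pt (fun u v => fst (G (polar u v))) x y /\
  continuity_2d_pt (fun u v => snd (G (polar u v))) x y.
Proof.
  intros HG Hx.
  set (z := polar x y). set (L := Cmod (G' z) + 1).
  assert (HL : 0 < L) by (pose proof (Cmod_ge_0 (G' z)); unfold L; lra).
  assert (Hz : Cmod z < 1) by (unfold z; rewrite Cmod_polar; exact Hx).
  assert (Hclose : forall eps : posreal,
    locally_2d (fun u v => Cmod (G (polar u v) - G z) < eps) x y).
  { intros eps. destruct (is_derive_on_disk_lipschitz_at G G' z HG Hz) as [d Hd].
    assert (Hm : 0 < Rmin d (eps / L) / 2).
    { apply Rdiv_lt_0_compat; [|lra]. apply Rmin_glb_lt; [apply cond_pos|].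
      apply Rdiv_lt_0_compat; [apply cond_pos | lra]. }
    assert (Hcos : continuity_2d_pt (fun u v => u * cos v) x y) by repeat continuity_2d_step.
    assert (Hsin : continuity_2d_pt (fun u v => u * sin v) x y) by repeat continuity_2d_step.
    destruct (Hcos (mkposreal _ Hm)) as [d1 Hd1]. destruct (Hsin (mkposreal _ Hm)) as [d2 Hd2].
    exists (mkposreal _ (Rmin_glb_lt _ _ _ (cond_pos d1) (cond_pos d2))). simpl.
    intros u v Hu Hv. pose proof (Rmin_l d1 d2). pose proof (Rmin_r d1 d2).
    specialize (Hd1 u v ltac:(lra) ltac:(lra)). specialize (Hd2 u v ltac:(lra) ltac:(lra)).
    simpl in Hd1, Hd2. pose proof (Rmin_l d (eps / L)). pose proof (Rmin_r d (eps / L)).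
    assert (Hw : Cmod (polar u v - z) < Rmin d (eps / L)).
    { eapply Rle_lt_trans; [apply Cmod_le_Rabs_fst_snd|]. unfold z, polar; simpl.
      unfold Rminus in Hd1, Hd2. lra. }
    eapply Rle_lt_trans; [apply Hd; lra|].
    apply Rlt_le_trans with (L * (eps / L)); [apply Rmult_lt_compat_l; lra | right; field; lra]. }
  split; intros eps; generalize (Hclose eps); apply locally_2d_impl;
    apply locally_2d_forall; intros u v H; (eapply Rle_lt_trans; [|exact H]).
  - apply (Rabs_fst_le_Cmod (G (polar u v) - G z)).
  - apply (Rabs_snd_le_Cmod (G (polar u v) - G z)).
Qed.

(** * Hardy's convexity theorem *)

Definition sqmod_on_circle (G : C -> C) (r v : R) :=
  fst (G (polar r v)) ^ 2 + snd (G (polar r v)) ^ 2.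

Definition circle_energy (G : C -> C) (r : R) := RInt (sqmod_on_circle G r) 0 (2 * PI).

(* With [w = e^{iv} G1(re^{iv})]: the real and imaginary parts of [conj (G0) w]. *)
Definition radial_pairing (G0 G1 : C -> C) (r v : R) :=
  fst (G0 (polar r v)) * fst (Cmult (cos v, sin v) (G1 (polar r v))) +
  snd (G0 (polar r v)) * snd (Cmult (cos v, sin v) (G1 (polar r v))).

Definition angular_pairing (G0 G1 : C -> C) (r v : R) :=
  fst (G0 (polar r v)) * snd (Cmult (cos v, sin v) (G1 (polar r v))) -
  snd (G0 (polar r v)) * fst (Cmult (cos v, sin v) (G1 (polar r v))).

Definition radial_pairing_deriv (G0 G1 G2 : C -> C) (r v : R) :=
  fst (Cmult (cos v, sin v) (G1 (polar r v))) ^ 2 +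
  snd (Cmult (cos v, sin v) (G1 (polar r v))) ^ 2 +
  fst (G0 (polar r v)) * fst (Cmult (cos v, sin v) (Cmult (cos v, sin v) (G2 (polar r v)))) +
  snd (G0 (polar r v)) * snd (Cmult (cos v, sin v) (Cmult (cos v, sin v) (G2 (polar r v)))).

Lemma sqmod_on_circle_rotate (G : C -> C) r v :
  sqmod_on_circle G r v =
  fst (Cmult (cos v, sin v) (G (polar r v))) ^ 2 + snd (Cmult (cos v, sin v) (G (polar r v))) ^ 2.
Proof.
  unfold sqmod_on_circle. simpl.
  transitivity ((fst (G (polar r v)) ^ 2 + snd (G (polar r v)) ^ 2) * (cos v ^ 2 + sin v ^ 2));
    [rewrite cos2_sin2; ring | ring].
Qed.

Lemma is_derive_sqmod_radius G0 G1 x v : is_derive_on_disk G0 G1 -> Rabs x < 1 ->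
  is_derive (fun u => sqmod_on_circle G0 u v) x (2 * radial_pairing G0 G1 x v).
Proof.
  intros H0 Hx. destruct (is_derive_polar_radius G0 G1 x v H0 Hx) as [Ha Hb].
  unfold sqmod_on_circle. eapply is_derive_eq; [repeat derive_step|].
  unfold radial_pairing. simpl. ring.
Qed.

Lemma is_derive_radial_pairing G0 G1 G2 x v :
  is_derive_on_disk G0 G1 -> is_derive_on_disk G1 G2 -> Rabs x < 1 ->
  is_derive (fun u => radial_pairing G0 G1 u v) x (radial_pairing_deriv G0 G1 G2 x v).
Proof.
  intros H0 H1 Hx. destruct (is_derive_polar_radius G0 G1 x v H0 Hx) as [Ha Hb].
  destruct (is_derive_polar_radius G1 G2 x v H1 Hx) as [Hc Hd].
  simpl in Ha, Hb, Hc, Hd. unfold radial_pairing. simpl.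
  eapply is_derive_eq; [repeat derive_step|]. unfold radial_pairing_deriv. simpl. ring.
Qed.

(* The Cauchy-Riemann equations enter here: the angular derivative is expressed
   through radial ones. *)
Lemma is_derive_angular_pairing G0 G1 G2 r th :
  is_derive_on_disk G0 G1 -> is_derive_on_disk G1 G2 -> Rabs r < 1 ->
  is_derive (fun v => angular_pairing G0 G1 r v) th
    (radial_pairing G0 G1 r th + r * radial_pairing_deriv G0 G1 G2 r th
       - 2 * r * sqmod_on_circle G1 r th).
Proof.
  intros H0 H1 Hr. destruct (is_derive_polar_angle G0 G1 r th H0 Hr) as [Ha Hb].
  destruct (is_derive_polar_angle G1 G2 r th H1 Hr) as [Hc Hd].
  simpl in Ha, Hb, Hc, Hd. unfold angular_pairing. simpl.
  eapply is_derive_eq; [repeat derive_step|].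
  unfold radial_pairing, radial_pairing_deriv, sqmod_on_circle. simpl.
  pose proof (cos2_sin2 th) as HCS.
  match goal with |- ?L = ?R =>
    assert (E : L - R = 2 * r * (fst (G1 (polar r th)) ^ 2 + snd (G1 (polar r th)) ^ 2) *
                        (1 - (cos th ^ 2 + sin th ^ 2))) by ring end.
  rewrite HCS in E. lra.
Qed.

Lemma continuity_2d_sqmod G G' x y : is_derive_on_disk G G' -> Rabs x < 1 ->
  continuity_2d_pt (sqmod_on_circle G) x y.
Proof.
  intros HG Hx. destruct (continuity_2d_polar G G' x y HG Hx).
  unfold sqmod_on_circle. repeat continuity_2d_step.
Qed.

Lemma ex_RInt_sqmod G G' x : is_derive_on_disk G G' -> Rabs x < 1 ->
  ex_RInt (sqmod_on_circle G x) 0 (2 * PI).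
Proof. intros HG Hx. apply ex_RInt_of_continuity_2d. intros; eapply continuity_2d_sqmod; eauto. Qed.

Lemma circle_energy_ge0 G G' x : is_derive_on_disk G G' -> Rabs x < 1 -> 0 <= circle_energy G x.
Proof.
  intros HG Hx. apply RInt_ge_0; [pose proof PI2_gt0; lra | eapply ex_RInt_sqmod; eauto|].
  intros v _. unfold sqmod_on_circle.
  pose proof (pow2_ge_0 (fst (G (polar x v)))); pose proof (pow2_ge_0 (snd (G (polar x v)))). lra.
Qed.

Section Hardy_convexity.
Variables G0 G1 G2 G3 : C -> C.
Hypothesis H0 : is_derive_on_disk G0 G1.
Hypothesis H1 : is_derive_on_disk G1 G2.
Hypothesis H2 : is_derive_on_disk G2 G3.

Lemma continuity_2d_radial_pairing x y : Rabs x < 1 ->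
  continuity_2d_pt (radial_pairing G0 G1) x y.
Proof.
  intros Hx. destruct (continuity_2d_polar G0 G1 x y H0 Hx).
  destruct (continuity_2d_polar G1 G2 x y H1 Hx).
  unfold radial_pairing. simpl. repeat continuity_2d_step.
Qed.

Lemma continuity_2d_radial_pairing_deriv x y : Rabs x < 1 ->
  continuity_2d_pt (radial_pairing_deriv G0 G1 G2) x y.
Proof.
  intros Hx. destruct (continuity_2d_polar G0 G1 x y H0 Hx).
  destruct (continuity_2d_polar G1 G2 x y H1 Hx).
  destruct (continuity_2d_polar G2 G3 x y H2 Hx).
  unfold radial_pairing_deriv. simpl. repeat continuity_2d_step.
Qed.

Lemma ex_RInt_radial_pairing x : Rabs x < 1 -> ex_RInt (radial_pairing G0 G1 x) 0 (2 * PI).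
Proof. intros Hx. apply ex_RInt_of_continuity_2d. intros; apply continuity_2d_radial_pairing; auto. Qed.

Lemma ex_RInt_radial_pairing_deriv x : Rabs x < 1 ->
  ex_RInt (radial_pairing_deriv G0 G1 G2 x) 0 (2 * PI).
Proof.
  intros Hx. apply ex_RInt_of_continuity_2d. intros; apply continuity_2d_radial_pairing_deriv; auto.
Qed.

Definition energy_deriv x := 2 * RInt (radial_pairing G0 G1 x) 0 (2 * PI).

Lemma is_derive_circle_energy x : Rabs x < 1 -> is_derive (circle_energy G0) x (energy_deriv x).
Proof.
  intros Hx. unfold energy_deriv. rewrite <- RInt_scal_R by (apply ex_RInt_radial_pairing; auto).
  apply (is_derive_RInt_param_open (sqmod_on_circle G0) (fun u v => 2 * radial_pairing G0 G1 u v)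
    0 (2 * PI) (-1) 1 x); [apply Rabs_lt_between; exact Hx| intros u t Hu ..];
    apply Rabs_lt_between in Hu.
  - apply is_derive_sqmod_radius; auto.
  - eapply continuity_2d_sqmod; eauto.
  - apply continuity_2d_pt_mult; [apply continuity_2d_pt_const|].
    apply continuity_2d_radial_pairing; auto.
Qed.

Lemma is_derive_energy_deriv x : Rabs x < 1 ->
  is_derive energy_deriv x (2 * RInt (radial_pairing_deriv G0 G1 G2 x) 0 (2 * PI)).
Proof.
  intros Hx. apply (is_derive_scal (fun u => RInt (radial_pairing G0 G1 u) 0 (2 * PI))).
  apply (is_derive_RInt_param_open _ _ 0 (2 * PI) (-1) 1 x);
    [apply Rabs_lt_between; exact Hx| intros u t Hu ..]; apply Rabs_lt_between in Hu.
  - apply is_derive_radial_pairing; auto.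
  - apply continuity_2d_radial_pairing; auto.
  - apply continuity_2d_radial_pairing_deriv; auto.
Qed.

(* The angular pairing is 2pi-periodic, so its angular derivative integrates to 0. *)
Lemma RInt_radial_pairing_identity x : Rabs x < 1 ->
  RInt (radial_pairing G0 G1 x) 0 (2 * PI) + x * RInt (radial_pairing_deriv G0 G1 G2 x) 0 (2 * PI)
  = 2 * x * circle_energy G1 x.
Proof.
  intros Hx.
  set (dP := fun v => radial_pairing G0 G1 x v + x * radial_pairing_deriv G0 G1 G2 x v
       - 2 * x * sqmod_on_circle G1 x v).
  assert (HI : is_RInt dP 0 (2 * PI)
    (minus (angular_pairing G0 G1 x (2 * PI)) (angular_pairing G0 G1 x 0))).
  { apply (is_RInt_derive (V:=R_CompleteNormedModule)).
    - intros v _. apply is_derive_angular_pairing; auto.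
    - intros v _. apply continuity_pt_filterlim.
      apply (continuity_pt_of_2d_snd (fun u v => radial_pairing G0 G1 u v
        + u * radial_pairing_deriv G0 G1 G2 u v - 2 * u * sqmod_on_circle G1 u v) x v).
      assert (continuity_2d_pt (radial_pairing G0 G1) x v)
        by (apply continuity_2d_radial_pairing; auto).
      assert (continuity_2d_pt (radial_pairing_deriv G0 G1 G2) x v)
        by (apply continuity_2d_radial_pairing_deriv; auto).
      assert (continuity_2d_pt (sqmod_on_circle G1) x v) by (eapply continuity_2d_sqmod; eauto).
      repeat continuity_2d_step. }
  assert (HP : angular_pairing G0 G1 x (2 * PI) = angular_pairing G0 G1 x 0).
  { unfold angular_pairing. rewrite polar_2PI, cos_2PI, sin_2PI, cos_0, sin_0. reflexivity. }
  rewrite HP in HI.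
  assert (HI0 : RInt dP 0 (2 * PI) = 0).
  { rewrite (is_RInt_unique (V:=R_CompleteNormedModule) dP 0 (2 * PI) _ HI).
    unfold minus, plus, opp; simpl. ring. }
  destruct (RInt_plus_scal _ _ x 0 (2 * PI) (ex_RInt_radial_pairing x Hx)
    (ex_RInt_radial_pairing_deriv x Hx)) as [_ E1].
  destruct (RInt_plus_scal dP (sqmod_on_circle G1 x) (2 * x) 0 (2 * PI) (ex_intro _ _ HI)
    (ex_RInt_sqmod G1 G2 x H1 Hx)) as [_ E2].
  rewrite <- E1. unfold circle_energy. rewrite HI0, Rplus_0_l in E2. rewrite <- E2.
  apply RInt_ext. intros v _. unfold dP. lra.
Qed.

Definition energy_deriv_wrt_log x := x * energy_deriv x.

Lemma is_derive_energy_deriv_wrt_log x : Rabs x < 1 ->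
  is_derive energy_deriv_wrt_log x (4 * x * circle_energy G1 x).
Proof.
  intros Hx. unfold energy_deriv_wrt_log.
  eapply is_derive_eq;
    [apply is_derive_Rmult; [apply is_derive_Rid | apply is_derive_energy_deriv; auto]|].
  replace (4 * x * circle_energy G1 x) with (2 * (2 * x * circle_energy G1 x)) by ring.
  rewrite <- (RInt_radial_pairing_identity x Hx). unfold energy_deriv. ring.
Qed.

Lemma energy_deriv_wrt_log_sq_le x : Rabs x < 1 ->
  energy_deriv_wrt_log x ^ 2 <= 4 * x ^ 2 * circle_energy G0 x * circle_energy G1 x.
Proof.
  intros Hx. unfold energy_deriv_wrt_log, energy_deriv, circle_energy.
  rewrite (RInt_ext (sqmod_on_circle G1 x)
    (fun v => fst (Cmult (cos v, sin v) (G1 (polar x v))) ^ 2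
            + snd (Cmult (cos v, sin v) (G1 (polar x v))) ^ 2))
    by (intros; apply sqmod_on_circle_rotate).
  assert (HCS := RInt_Cauchy_Schwarz
    (fun v => fst (G0 (polar x v))) (fun v => snd (G0 (polar x v)))
    (fun v => fst (Cmult (cos v, sin v) (G1 (polar x v))))
    (fun v => snd (Cmult (cos v, sin v) (G1 (polar x v)))) 0 (2 * PI) (Rlt_le _ _ PI2_gt0)
    (ex_RInt_sqmod G0 G1 x H0 Hx)
    (ex_RInt_ext _ _ 0 (2 * PI) (fun v _ => sqmod_on_circle_rotate G1 x v)
      (ex_RInt_sqmod G1 G2 x H1 Hx))
    (ex_RInt_radial_pairing x Hx)).
  change (RInt (radial_pairing G0 G1 x) 0 (2 * PI) ^ 2 <=
    RInt (sqmod_on_circle G0 x) 0 (2 * PI) *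
    RInt (fun v => fst (Cmult (cos v, sin v) (G1 (polar x v))) ^ 2
            + snd (Cmult (cos v, sin v) (G1 (polar x v))) ^ 2) 0 (2 * PI)) in HCS.
  pose proof (pow2_ge_0 x). nra.
Qed.

Lemma energy_deriv_wrt_log_ge0 x : 0 <= x < 1 -> 0 <= energy_deriv_wrt_log x.
Proof.
  intros Hx. replace 0 with (energy_deriv_wrt_log 0) by (unfold energy_deriv_wrt_log; ring).
  apply (le_of_is_derive_nonneg energy_deriv_wrt_log (fun y => 4 * y * circle_energy G1 y));
    [lra | intros y Hy ..].
  - apply is_derive_energy_deriv_wrt_log. apply Rabs_lt_between; lra.
  - pose proof (circle_energy_ge0 G1 G2 y H1 ltac:(apply Rabs_lt_between; lra)). nra.
Qed.

Lemma energy_deriv_ge0 x : 0 <= x < 1 -> 0 <= energy_deriv x.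
Proof.
  intros Hx. destruct (Req_dec x 0) as [->|E].
  - assert (HA : is_derive energy_deriv_wrt_log 0
      (1 * energy_deriv 0 + 0 * (2 * RInt (radial_pairing_deriv G0 G1 G2 0) 0 (2 * PI)))).
    { apply is_derive_Rmult; [apply is_derive_Rid | apply is_derive_energy_deriv].
      rewrite Rabs_R0; lra. }
    pose proof (is_derive_unique _ _ _ HA) as EA.
    rewrite (is_derive_unique _ _ _ (is_derive_energy_deriv_wrt_log 0 ltac:(rewrite Rabs_R0; lra)))
      in EA.
    lra.
  - pose proof (energy_deriv_wrt_log_ge0 x Hx). unfold energy_deriv_wrt_log in H.
    destruct (Rle_dec 0 (energy_deriv x)); auto. nra.
Qed.

Lemma circle_energy_nondecreasing x y : 0 <= x <= y -> y < 1 ->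
  circle_energy G0 x <= circle_energy G0 y.
Proof.
  intros Hxy Hy. apply (le_of_is_derive_nonneg (circle_energy G0) energy_deriv); [lra|..].
  - intros z Hz. apply is_derive_circle_energy. apply Rabs_lt_between; lra.
  - intros z Hz. apply energy_deriv_ge0. lra.
Qed.

(* The slope of [s |-> ln (u(e^s) + eps)]; [eps > 0] keeps the logarithm finite. *)
Definition log_energy_slope eps x := energy_deriv_wrt_log x / (circle_energy G0 x + eps).

Lemma log_energy_slope_nondecreasing eps y t : 0 < eps -> 0 < y <= t -> t < 1 ->
  log_energy_slope eps y <= log_energy_slope eps t.
Proof.
  intros He Hy Ht.
  set (u0 := circle_energy G0). set (u1 := circle_energy G1). set (D := energy_deriv_wrt_log).
  apply (le_of_is_derive_nonneg (log_energy_slope eps)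
    (fun x => (4 * x * u1 x * (u0 x + eps) - D x * energy_deriv x) / (u0 x + eps) ^ 2));
    [lra| intros x Hx ..]; assert (Hxa : Rabs x < 1) by (apply Rabs_lt_between; lra);
    pose proof (circle_energy_ge0 G0 G1 x H0 Hxa); pose proof (circle_energy_ge0 G1 G2 x H1 Hxa).
  - unfold log_energy_slope.
    eapply is_derive_eq; [apply (is_derive_div D (fun z => u0 z + eps))|].
    + apply is_derive_energy_deriv_wrt_log; auto.
    + apply (is_derive_Rplus u0 (fun _ => eps));
        [apply is_derive_circle_energy; auto | apply is_derive_Rconst].
    + unfold u0. lra.
    + rewrite Rplus_0_r. reflexivity.
  - apply Rmult_le_pos; [| apply Rlt_le, Rinv_0_lt_compat, pow_lt; unfold u0; lra].
    pose proof (energy_deriv_wrt_log_sq_le x Hxa) as HCS. unfold energy_deriv_wrt_log in HCS.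
    assert (energy_deriv x ^ 2 <= 4 * u0 x * u1 x).
    { apply Rmult_le_reg_l with (x ^ 2); [apply pow_lt; lra|]. unfold u0, u1. nra. }
    assert (x * energy_deriv x ^ 2 <= x * (4 * u0 x * u1 x)) by (apply Rmult_le_compat_l; lra).
    assert (0 <= x * u1 x * eps) by (apply Rmult_le_pos; [apply Rmult_le_pos|]; unfold u1; lra).
    unfold D, energy_deriv_wrt_log. simpl in *. nra.
Qed.

Lemma is_derive_log_energy_minus eps c y : 0 < eps -> 0 < y < 1 ->
  is_derive (fun z => ln (circle_energy G0 z + eps) - c * ln z) y ((log_energy_slope eps y - c) / y).
Proof.
  intros He Hy. assert (Hya : Rabs y < 1) by (apply Rabs_lt_between; lra).
  pose proof (circle_energy_ge0 G0 G1 y H0 Hya).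
  assert (Hu : is_derive (fun z => circle_energy G0 z + eps) y (energy_deriv y + 0)).
  { apply (is_derive_Rplus (circle_energy G0) (fun _ => eps));
      [apply is_derive_circle_energy; auto | apply is_derive_Rconst]. }
  eapply is_derive_eq.
  - apply (is_derive_Rminus (fun z => ln (circle_energy G0 z + eps)) (fun z => c * ln z)).
    + apply (is_derive_Rln (fun z => circle_energy G0 z + eps)); [exact Hu | lra].
    + apply (is_derive_Rmult (fun _ => c) ln); [apply is_derive_Rconst|].
      apply (is_derive_Rln (fun z => z)); [apply is_derive_Rid | lra].
  - unfold log_energy_slope, energy_deriv_wrt_log. field. lra.
Qed.

(* Letting [t' -> 1], where [ln t' -> 0]. *)
Lemma le_of_forall_lt_1 q t K : 0 < t < 1 -> 0 <= K ->
  (forall t', t < t' < 1 -> q * (ln t' - ln t) <= K) -> q * (- ln t) <= K.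
Proof.
  intros Ht HK H. destruct (Rle_dec (q * - ln t) K) as [E|E]; auto. exfalso.
  apply Rnot_le_lt in E. pose proof (ln_neg t Ht).
  assert (Hq : 0 < q) by (destruct (Rle_dec q 0); [nra|lra]).
  set (dl := q * - ln t - K).
  set (m := Rmax t (exp (- dl / (2 * q)))).
  assert (Hm1 : exp (- dl / (2 * q)) < 1).
  { rewrite <- exp_0. apply exp_increasing. unfold Rdiv.
    rewrite Ropp_mult_distr_l_reverse. apply Ropp_lt_gt_0_contravar.
    apply Rmult_lt_0_compat; [unfold dl; lra | apply Rinv_0_lt_compat; lra]. }
  assert (Hm : m < 1) by (unfold m; apply Rmax_lub_lt; lra).
  assert (Hmt : t <= m) by apply Rmax_l.
  assert (Hme : exp (- dl / (2 * q)) <= m) by apply Rmax_r.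
  assert (Hl : - dl / (2 * q) <= ln ((m + 1) / 2)).
  { rewrite <- (ln_exp (- dl / (2 * q))) at 1. apply ln_le; [apply exp_pos | lra]. }
  specialize (H ((m + 1) / 2) ltac:(lra)).
  assert (q * (- dl / (2 * q)) = - dl / 2) by (field; lra).
  assert (q * (- dl / (2 * q) - ln t) <= q * (ln ((m + 1) / 2) - ln t))
    by (apply Rmult_le_compat_l; lra).
  unfold dl in *. nra.
Qed.

Lemma circle_energy_three_circles_eps eps r t L : 0 < eps -> 0 < r <= t -> t < 1 ->
  (forall y, 0 <= y < 1 -> circle_energy G0 y <= L) ->
  ln (circle_energy G0 t + eps) * (- ln r) <=
    (- ln t) * ln (circle_energy G0 r + eps) + (ln t - ln r) * ln (L + eps).
Proof.
  intros He Hr Ht HL.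
  set (u := circle_energy G0) in *.
  assert (Hu : forall y, 0 <= y < 1 -> 0 <= u y)
    by (intros y Hy; apply (circle_energy_ge0 G0 G1); auto; apply Rabs_lt_between; lra).
  assert (Hc : forall y, 0 <= y < 1 -> ln (u y + eps) <= ln (L + eps))
    by (intros y Hy; pose proof (Hu y Hy); pose proof (HL y Hy); apply ln_le; lra).
  set (q := log_energy_slope eps t).
  assert (Sr : ln (u t + eps) - q * ln t <= ln (u r + eps) - q * ln r).
  { cut (- (ln (u r + eps) - q * ln r) <= - (ln (u t + eps) - q * ln t)); [lra|].
    apply (le_of_is_derive_nonneg (fun z => - (ln (u z + eps) - q * ln z))
      (fun z => - ((log_energy_slope eps z - q) / z)));
      [lra | intros z Hz ..].
    - apply is_derive_Ropp. apply is_derive_log_energy_minus; auto; lra.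
    - pose proof (log_energy_slope_nondecreasing eps z t He ltac:(lra) Ht).
      assert (0 <= (q - log_energy_slope eps z) / z)
        by (apply Rmult_le_pos; [unfold q; lra | apply Rlt_le, Rinv_0_lt_compat; lra]).
      unfold Rdiv in *. lra. }
  assert (St : q * (- ln t) <= ln (L + eps) - ln (u t + eps)).
  { apply le_of_forall_lt_1; [lra | pose proof (Hc t ltac:(lra)); lra|]. intros t' Ht'.
    assert (ln (u t + eps) - q * ln t <= ln (u t' + eps) - q * ln t').
    { apply (le_of_is_derive_nonneg (fun z => ln (u z + eps) - q * ln z)
        (fun z => (log_energy_slope eps z - q) / z));
        [lra | intros z Hz ..].
      - apply is_derive_log_energy_minus; auto; lra.
      - pose proof (log_energy_slope_nondecreasing eps t z He ltac:(lra) ltac:(lra)).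
        apply Rmult_le_pos; [unfold q; lra | apply Rlt_le, Rinv_0_lt_compat; lra]. }
    pose proof (Hc t' ltac:(lra)). lra. }
  pose proof (ln_neg t ltac:(lra)). assert (ln r <= ln t) by (apply ln_le; lra).
  assert (ln (u t + eps) * (- ln t) <= ln (u r + eps) * (- ln t) + q * (- ln t) * (ln t - ln r)).
  { replace (q * - ln t * (ln t - ln r)) with ((q * (ln t - ln r)) * (- ln t)) by ring.
    rewrite <- Rmult_plus_distr_r. apply Rmult_le_compat_r; lra. }
  assert (q * (- ln t) * (ln t - ln r) <= (ln (L + eps) - ln (u t + eps)) * (ln t - ln r))
    by (apply Rmult_le_compat_r; lra).
  nra.
Qed.

End Hardy_convexity.

Lemma log_convex_bound_of_eps x y L lam : 0 < lam <= 1 -> 0 <= x -> 0 <= y -> 0 < L ->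
  (forall e, 0 < e -> ln (x + e) <= lam * ln (y + e) + (1 - lam) * ln (L + e)) ->
  (y = 0 -> x = 0) /\ (0 < y -> x <= exp (lam * ln y + (1 - lam) * ln L)).
Proof.
  intros Hlam Hx Hy HL H. split.
  - intros ->. destruct (Req_dec x 0) as [Z|Z]; auto. exfalso.
    set (c := (ln x - (1 - lam) * ln (L + 1) - 1) / lam).
    set (e := Rmin 1 (exp c)).
    assert (He : 0 < e) by (apply Rmin_glb_lt; [lra | apply exp_pos]).
    assert (He1 : e <= 1) by apply Rmin_l.
    specialize (H e He). rewrite Rplus_0_l in H.
    assert (ln x <= ln (x + e)) by (apply ln_le; lra).
    assert (ln (L + e) <= ln (L + 1)) by (apply ln_le; lra).
    assert (Hc : ln e <= c) by (rewrite <- (ln_exp c); apply ln_le; [lra | apply Rmin_r]).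
    assert (lam * ln e <= ln x - (1 - lam) * ln (L + 1) - 1).
    { replace (ln x - (1 - lam) * ln (L + 1) - 1) with (lam * c) by (unfold c; field; lra).
      apply Rmult_le_compat_l; lra. }
    assert ((1 - lam) * ln (L + e) <= (1 - lam) * ln (L + 1)) by (apply Rmult_le_compat_l; lra).
    lra.
  - intros Hyp. destruct (Req_dec x 0) as [->|Z]; [left; apply exp_pos|].
    rewrite <- (exp_ln x) by lra. apply exp_le.
    apply (le_of_le_plus_eps_mult _ _ (lam / y + (1 - lam) / L)).
    { apply Rplus_le_le_0_compat; apply Rmult_le_pos; try lra; apply Rlt_le, Rinv_0_lt_compat; lra. }
    intros e He. specialize (H e He).
    assert (ln x <= ln (x + e)) by (apply ln_le; lra).
    pose proof (ln_plus_le y e Hyp ltac:(lra)). pose proof (ln_plus_le L e HL ltac:(lra)).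
    assert (lam * ln (y + e) <= lam * (ln y + e / y)) by (apply Rmult_le_compat_l; lra).
    assert ((1 - lam) * ln (L + e) <= (1 - lam) * (ln L + e / L)) by (apply Rmult_le_compat_l; lra).
    replace (lam * ln y + (1 - lam) * ln L + e * (lam / y + (1 - lam) / L))
      with (lam * (ln y + e / y) + (1 - lam) * (ln L + e / L)) by (field; lra).
    lra.
Qed.

Lemma ln_ratio_in_unit r t : 0 < r <= t -> t < 1 -> 0 < ln t / ln r <= 1.
Proof.
  intros Hr Ht. pose proof (ln_neg r ltac:(lra)). pose proof (ln_neg t ltac:(lra)).
  assert (ln r <= ln t) by (apply ln_le; lra).
  replace (ln t / ln r) with ((- ln t) / (- ln r)) by (field; lra).
  split; [apply Rdiv_lt_0_compat; lra|].
  apply Rmult_le_reg_r with (- ln r); [lra|]. field_simplify; lra.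
Qed.

(* Hadamard's three circles theorem for the quadratic means: [ln u] is convex in [ln r]. *)
Lemma circle_energy_three_circles G0 G1 G2 G3 r t L :
  is_derive_on_disk G0 G1 -> is_derive_on_disk G1 G2 -> is_derive_on_disk G2 G3 ->
  0 < r <= t -> t < 1 -> 0 < L -> (forall y, 0 <= y < 1 -> circle_energy G0 y <= L) ->
  (circle_energy G0 r = 0 -> circle_energy G0 t = 0) /\
  (0 < circle_energy G0 r -> circle_energy G0 t <=
     exp ((ln t / ln r) * ln (circle_energy G0 r) + (1 - ln t / ln r) * ln L)).
Proof.
  intros Ha Hb Hc Hr Ht HL Hbound.
  pose proof (ln_neg r ltac:(lra)).
  apply log_convex_bound_of_eps; [apply ln_ratio_in_unit; auto
    | apply (circle_energy_ge0 G0 G1); auto; apply Rabs_lt_between; lra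
    | apply (circle_energy_ge0 G0 G1); auto; apply Rabs_lt_between; lra | auto |].
  intros e He.
  pose proof (circle_energy_three_circles_eps G0 G1 G2 G3 Ha Hb Hc e r t L He Hr Ht Hbound) as T.
  apply Rmult_le_reg_r with (- ln r); [lra|].
  replace ((ln t / ln r * ln (circle_energy G0 r + e) + (1 - ln t / ln r) * ln (L + e)) * - ln r)
    with (- ln t * ln (circle_energy G0 r + e) + (ln t - ln r) * ln (L + e)) by (field; lra).
  exact T.
Qed.

(** * Quadratic means and Minkowski's inequality *)

Lemma sqrt_le_of_deriv_le (N dN B dB : R -> R) a b : a <= b ->
  (forall t, a <= t <= b -> is_derive N t (dN t) /\ 0 <= N t) ->
  (forall t, a <= t <= b -> is_derive B t (dB t) /\ 0 <= dB t) ->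
  (forall t, a <= t <= b -> dN t <= 2 * sqrt (N t) * dB t) ->
  sqrt (N b) <= sqrt (N a) + (B b - B a).
Proof.
  intros Hab HN HB Hd.
  apply (le_of_le_plus_eps_mult _ _ 1); [lra|]. intros e He. pose proof (pow2_ge_0 e).
  assert (Hmono : sqrt (N b + e ^ 2) - B b <= sqrt (N a + e ^ 2) - B a).
  { cut (- (sqrt (N a + e ^ 2) - B a) <= - (sqrt (N b + e ^ 2) - B b)); [lra|].
    apply (le_of_is_derive_nonneg (fun t => - (sqrt (N t + e ^ 2) - B t))
      (fun t => - (dN t / (2 * sqrt (N t + e ^ 2)) - dB t))); [lra| intros t Ht ..];
      destruct (HN t Ht) as [HNd HN0];
      assert (Hpos : 0 < N t + e ^ 2) by (pose proof (pow_lt e 2 He); lra).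
    - apply is_derive_Ropp, (is_derive_Rminus (fun t => sqrt (N t + e ^ 2)) B); [|apply HB; auto].
      eapply is_derive_eq; [apply (is_derive_sqrt (fun t => N t + e ^ 2)); [|exact Hpos]|].
      + apply (is_derive_Rplus N (fun _ => e ^ 2)); [exact HNd | apply is_derive_Rconst].
      + rewrite Rplus_0_r. reflexivity.
    - assert (Hs : 0 < sqrt (N t + e ^ 2)) by (apply sqrt_lt_R0; exact Hpos).
      assert (sqrt (N t) <= sqrt (N t + e ^ 2)) by (apply sqrt_le_1_alt; lra).
      pose proof (sqrt_pos (N t)). specialize (Hd t Ht). destruct (HB t Ht) as [_ HdB].
      assert (dN t / (2 * sqrt (N t + e ^ 2)) <= dB t).
      { apply Rmult_le_reg_r with (2 * sqrt (N t + e ^ 2)); [lra|].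
        unfold Rdiv. rewrite Rmult_assoc, Rinv_l, Rmult_1_r by lra.
        nra. }
      lra. }
  destruct (HN a ltac:(lra)) as [_ Ha]. destruct (HN b ltac:(lra)) as [_ Hb].
  assert (sqrt (N b) <= sqrt (N b + e ^ 2)) by (apply sqrt_le_1_alt; lra).
  pose proof (sqrt_plus_sq_le (N a) e Ha ltac:(lra)). lra.
Qed.

Definition circle_norm (phi : R -> C) : R :=
  sqrt (/ (2 * PI) * RInt (fun t => Cmod (phi t) ^ 2) 0 (2 * PI)).

Definition circle_energy_of (phi : R -> C) : R :=
  RInt (fun v => fst (phi v) ^ 2 + snd (phi v) ^ 2) 0 (2 * PI).

Lemma Cmod_sq (z : C) : Cmod z ^ 2 = fst z ^ 2 + snd z ^ 2.
Proof.
  unfold Cmod. rewrite pow2_sqrt; [reflexivity|].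
  pose proof (pow2_ge_0 (fst z)); pose proof (pow2_ge_0 (snd z)); lra.
Qed.

Lemma circle_norm_eq (phi : R -> C) : circle_norm phi = sqrt (/ (2 * PI) * circle_energy_of phi).
Proof. unfold circle_norm. f_equal. f_equal. apply RInt_ext. intros; apply Cmod_sq. Qed.

Lemma Mmean2_eq G r : Mmean2 G r = sqrt (/ (2 * PI) * circle_energy G r).
Proof. exact (circle_norm_eq (fun v => G (polar r v))). Qed.

Lemma circle_norm_ge0 (phi : R -> C) : 0 <= circle_norm phi.
Proof. apply sqrt_pos. Qed.

Lemma circle_energy_of_ge0 (phi : R -> C) :
  ex_RInt (fun v => fst (phi v) ^ 2 + snd (phi v) ^ 2) 0 (2 * PI) -> 0 <= circle_energy_of phi.
Proof.
  intros H. apply RInt_ge_0; [pose proof PI2_gt0; lra | exact H|].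
  intros v _. pose proof (pow2_ge_0 (fst (phi v))); pose proof (pow2_ge_0 (snd (phi v))). lra.
Qed.

Lemma RInt_pairing_le (phi psi : R -> C) :
  ex_RInt (fun v => fst (phi v) ^ 2 + snd (phi v) ^ 2) 0 (2 * PI) ->
  ex_RInt (fun v => fst (psi v) ^ 2 + snd (psi v) ^ 2) 0 (2 * PI) ->
  ex_RInt (fun v => fst (phi v) * fst (psi v) + snd (phi v) * snd (psi v)) 0 (2 * PI) ->
  / (2 * PI) * RInt (fun v => fst (phi v) * fst (psi v) + snd (phi v) * snd (psi v)) 0 (2 * PI)
  <= circle_norm phi * circle_norm psi.
Proof.
  intros e1 e2 e3. rewrite !circle_norm_eq, <- sqrt_mult
    by (apply Rmult_le_pos;
        [apply Rlt_le, Rinv_0_lt_compat, PI2_gt0 | apply circle_energy_of_ge0; auto]).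
  set (X := RInt (fun v => fst (phi v) * fst (psi v) + snd (phi v) * snd (psi v)) 0 (2 * PI)).
  pose proof (RInt_Cauchy_Schwarz (fun v => fst (phi v)) (fun v => snd (phi v))
    (fun v => fst (psi v)) (fun v => snd (psi v)) 0 (2 * PI) (Rlt_le _ _ PI2_gt0) e1 e2 e3) as HCS.
  fold X in HCS. change (X ^ 2 <= circle_energy_of phi * circle_energy_of psi) in HCS.
  apply Rle_trans with (Rabs (/ (2 * PI) * X)); [apply Rle_abs|].
  rewrite <- sqrt_Rsqr_abs. apply sqrt_le_1_alt. unfold Rsqr.
  transitivity (/ (2 * PI) * / (2 * PI) * X ^ 2); [right; ring|].
  transitivity (/ (2 * PI) * / (2 * PI) * (circle_energy_of phi * circle_energy_of psi));
    [|right; ring].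
  apply Rmult_le_compat_l; [|exact HCS].
  pose proof (Rinv_0_lt_compat _ PI2_gt0). nra.
Qed.

Lemma circle_norm_triangle (phi psi : R -> C) :
  ex_RInt (fun v => fst (phi v) ^ 2 + snd (phi v) ^ 2) 0 (2 * PI) ->
  ex_RInt (fun v => fst (psi v) ^ 2 + snd (psi v) ^ 2) 0 (2 * PI) ->
  ex_RInt (fun v => fst (phi v) * fst (psi v) + snd (phi v) * snd (psi v)) 0 (2 * PI) ->
  circle_norm (fun v => Cplus (phi v) (psi v)) <= circle_norm phi + circle_norm psi.
Proof.
  intros e1 e2 e3. pose proof (RInt_pairing_le phi psi e1 e2 e3) as HX.
  pose proof (sqrt_pos (/ (2 * PI) * circle_energy_of phi)).
  pose proof (sqrt_pos (/ (2 * PI) * circle_energy_of psi)).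
  rewrite !circle_norm_eq in *.
  set (c := / (2 * PI)) in *. set (A := circle_energy_of phi) in *.
  set (B := circle_energy_of psi) in *.
  set (X := RInt (fun v => fst (phi v) * fst (psi v) + snd (phi v) * snd (psi v)) 0 (2 * PI)) in *.
  assert (Hc0 : 0 < c) by (apply Rinv_0_lt_compat, PI2_gt0).
  assert (HA : 0 <= A) by (apply circle_energy_of_ge0; auto).
  assert (HB : 0 <= B) by (apply circle_energy_of_ge0; auto).
  assert (E : circle_energy_of (fun v => Cplus (phi v) (psi v)) = A + 2 * X + B).
  { destruct (RInt_plus_scal _ _ 2 0 (2 * PI) e1 e3) as [e4 E1].
    destruct (RInt_plus_scal _ _ 1 0 (2 * PI) e4 e2) as [_ E2].
    unfold A, B, X, circle_energy_of.
    rewrite <- (Rmult_1_l (RInt (fun v => fst (psi v) ^ 2 + snd (psi v) ^ 2) 0 (2 * PI))).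
    rewrite <- E1, <- E2. apply RInt_ext. intros v _. simpl. lra. }
  rewrite E. rewrite <- (sqrt_pow2 (sqrt (c * A) + sqrt (c * B))) by lra.
  apply sqrt_le_1_alt.
  replace ((sqrt (c * A) + sqrt (c * B)) ^ 2) with
    (sqrt (c * A) * sqrt (c * A) + 2 * (sqrt (c * A) * sqrt (c * B)) + sqrt (c * B) * sqrt (c * B))
    by ring.
  rewrite !sqrt_sqrt by nra. nra.
Qed.

(** * Taylor's formula on circles *)

Definition cis (a : R) : C := (cos a, sin a).

Lemma Cmod_cis a : Cmod (cis a) = 1.
Proof. unfold Cmod, cis. simpl fst; simpl snd. rewrite cos2_sin2. apply sqrt_1. Qed.

Lemma circle_norm_scal_unimodular (w e : R -> C) (c : R) :
  (forall v, Cmod (e v) = 1) ->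
  ex_RInt (fun v => fst (w v) ^ 2 + snd (w v) ^ 2) 0 (2 * PI) ->
  circle_norm (fun v => RtoC c * (e v * w v))%C = Rabs c * circle_norm w.
Proof.
  intros He Hw. unfold circle_norm.
  rewrite (RInt_ext _ (fun v => c ^ 2 * Cmod (w v) ^ 2))
    by (intros v _; rewrite !Cmod_mult, He, Cmod_R, Rmult_1_l, Rpow_mult_distr, pow2_abs; reflexivity).
  assert (Hw' : ex_RInt (fun v => Cmod (w v) ^ 2) 0 (2 * PI))
    by (eapply ex_RInt_ext; [intros v _; symmetry; apply Cmod_sq | exact Hw]).
  assert (HI : 0 <= / (2 * PI) * RInt (fun v => Cmod (w v) ^ 2) 0 (2 * PI)).
  { apply Rmult_le_pos; [apply Rlt_le, Rinv_0_lt_compat, PI2_gt0|].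
    apply RInt_ge_0; [pose proof PI2_gt0; lra | exact Hw' | intros; apply pow2_ge_0]. }
  rewrite RInt_scal_R by exact Hw'.
  rewrite <- (sqrt_Rsqr_abs c), <- sqrt_mult by (auto; apply Rle_0_sqr).
  f_equal. unfold Rsqr. ring.
Qed.

(* Minkowski's integral inequality in differential form: [circle_norm (H t)] grows no
   faster than the circle norm of the [t]-derivative [K t]. *)
Lemma circle_norm_variation (H K : R -> R -> C) (B dB : R -> R) lo hi a b :
  lo < a <= b -> b < hi ->
  (forall t th, lo < t < hi ->
     is_derive (fun t => fst (H t th)) t (fst (K t th)) /\
     is_derive (fun t => snd (H t th)) t (snd (K t th))) ->
  (forall t th, lo < t < hi ->
     continuity_2d_pt (fun u v => fst (H u v)) t th /\ continuity_2d_pt (fun u v => snd (H u v)) t th /\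
     continuity_2d_pt (fun u v => fst (K u v)) t th /\
     continuity_2d_pt (fun u v => snd (K u v)) t th) ->
  (forall t, a <= t <= b -> is_derive B t (dB t) /\ circle_norm (K t) <= dB t) ->
  circle_norm (H b) <= circle_norm (H a) + (B b - B a).
Proof.
  intros Hab Hbh Hd Hc HB.
  set (X := fun t => RInt (fun v => fst (H t v) * fst (K t v) + snd (H t v) * snd (K t v)) 0 (2 * PI)).
  set (c := / (2 * PI)).
  assert (Hc0 : 0 < c) by (apply Rinv_0_lt_compat, PI2_gt0).
  assert (Hex : forall t, lo < t < hi ->
     ex_RInt (fun v => fst (H t v) ^ 2 + snd (H t v) ^ 2) 0 (2 * PI) /\
     ex_RInt (fun v => fst (K t v) ^ 2 + snd (K t v) ^ 2) 0 (2 * PI) /\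
     ex_RInt (fun v => fst (H t v) * fst (K t v) + snd (H t v) * snd (K t v)) 0 (2 * PI)).
  { intros t Ht. repeat split; apply (ex_RInt_of_continuity_2d (fun u v => _) t); intros th _;
      destruct (Hc t th Ht) as [? [? [? ?]]]; repeat continuity_2d_step. }
  rewrite !circle_norm_eq.
  apply (sqrt_le_of_deriv_le (fun t => c * circle_energy_of (H t)) (fun t => c * (2 * X t)) B dB);
    [lra | intros t Ht ..]; destruct (Hex t ltac:(lra)) as [e1 [e2 e3]].
  - split; [|apply Rmult_le_pos; [lra | apply circle_energy_of_ge0; auto]].
    apply is_derive_scal. unfold X. rewrite <- RInt_scal_R by exact e3.
    apply (is_derive_RInt_param_open (fun u v => fst (H u v) ^ 2 + snd (H u v) ^ 2)
      (fun u v => 2 * (fst (H u v) * fst (K u v) + snd (H u v) * snd (K u v))) 0 (2 * PI) lo hi t);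
      [lra | intros u th Hu; destruct (Hd u th Hu); destruct (Hc u th Hu) as [? [? [? ?]]] ..].
    + eapply is_derive_eq; [repeat derive_step|]. simpl. ring.
    + repeat continuity_2d_step.
    + repeat continuity_2d_step.
  - destruct (HB t Ht) as [HBd HBn]. pose proof (sqrt_pos (/ (2 * PI) * circle_energy_of (K t))).
    rewrite circle_norm_eq in HBn. split; [exact HBd | lra].
  - destruct (HB t Ht) as [_ HBn].
    pose proof (RInt_pairing_le (H t) (K t) e1 e2 e3) as HX. fold (X t) c in HX.
    pose proof (circle_norm_ge0 (H t)). rewrite <- circle_norm_eq.
    apply Rle_trans with (2 * (circle_norm (H t) * circle_norm (K t))); [lra|].
    rewrite Rmult_assoc. apply Rmult_le_compat_l; [lra|]. apply Rmult_le_compat_l; lra.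
Qed.

Definition taylor_term (F : nat -> C -> C) (rho : R) (s : nat) (t th : R) : C :=
  (RtoC ((rho - t) ^ s / INR (Factorial.fact s)) * (cis (INR s * th) * F s (polar t th)))%C.

(* As [(rho - t) e^{i th} = rho e^{i th} - t e^{i th}], this is the Taylor polynomial of
   degree [n - 1] of [F 0] at [t e^{i th}], evaluated at [rho e^{i th}]. *)
Fixpoint taylor_poly (F : nat -> C -> C) (rho : R) (n : nat) (t th : R) : C :=
  match n with
  | O => 0%C
  | S n => (taylor_poly F rho n t th + taylor_term F rho n t th)%C
  end.

Definition taylor_remainder (F : nat -> C -> C) (rho : R) (n : nat) (t th : R) : C :=
  (RtoC ((rho - t) ^ n / INR (Factorial.fact n)) * (cis (INR (S n) * th) * F (S n) (polar t th)))%C.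

Lemma cis_S s th : cis (INR (S s) * th) = (cis (INR s * th) * cis th)%C.
Proof.
  unfold cis. rewrite S_INR. replace ((INR s + 1) * th) with (INR s * th + th) by ring.
  rewrite cos_plus, sin_plus. unfold Cmult; simpl. f_equal; ring.
Qed.

Lemma is_derive_taylor_term (F : nat -> C -> C) rho s t th :
  is_derive_on_disk (F s) (F (S s)) -> Rabs t < 1 ->
  is_derive (fun t => fst (taylor_term F rho s t th)) t
    (- INR s * (rho - t) ^ pred s / INR (Factorial.fact s) * fst (cis (INR s * th) * F s (polar t th))%C
     + fst (taylor_remainder F rho s t th)) /\
  is_derive (fun t => snd (taylor_term F rho s t th)) t
    (- INR s * (rho - t) ^ pred s / INR (Factorial.fact s) * snd (cis (INR s * th) * F s (polar t th))%C
     + snd (taylor_remainder F rho s t th)).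
Proof.
  intros HF Ht. destruct (is_derive_polar_radius (F s) (F (S s)) t th HF Ht) as [Ha Hb].
  simpl in Ha, Hb. unfold taylor_remainder. rewrite cis_S. unfold taylor_term, cis. simpl.
  split; (eapply is_derive_eq; [repeat derive_step|]); simpl; field; apply INR_fact_neq_0.
Qed.

(* The derivative in [t] telescopes, leaving only the last term. *)
Lemma is_derive_taylor_poly (F : nat -> C -> C) rho n t th :
  (forall j, is_derive_on_disk (F j) (F (S j))) -> Rabs t < 1 ->
  is_derive (fun t => fst (taylor_poly F rho (S n) t th)) t (fst (taylor_remainder F rho n t th)) /\
  is_derive (fun t => snd (taylor_poly F rho (S n) t th)) t (snd (taylor_remainder F rho n t th)).
Proof.
  intros HF Ht. induction n as [|n [IHa IHb]].
  - destruct (is_derive_taylor_term F rho 0 t th (HF 0%nat) Ht) as [Ha Hb]. simpl.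
    split; (eapply is_derive_eq;
      [apply is_derive_Rplus; [apply is_derive_Rconst | eassumption] | simpl; field]).
  - destruct (is_derive_taylor_term F rho (S n) t th (HF (S n)) Ht) as [Ha Hb].
    cbn [taylor_poly fst snd Cplus].
    split; (eapply is_derive_eq; [apply is_derive_Rplus; eassumption|]);
      unfold taylor_remainder, cis; cbn -[INR Factorial.fact pow];
      rewrite (fact_simpl n), mult_INR, !S_INR; field;
      split; try apply INR_fact_neq_0; pose proof (pos_INR n); lra.
Qed.

Lemma continuity_2d_taylor_term (F : nat -> C -> C) rho s x y :
  is_derive_on_disk (F s) (F (S s)) -> Rabs x < 1 ->
  continuity_2d_pt (fun u v => fst (taylor_term F rho s u v)) x y /\
  continuity_2d_pt (fun u v => snd (taylor_term F rho s u v)) x y.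
Proof.
  intros HF Hx. destruct (continuity_2d_polar (F s) (F (S s)) x y HF Hx).
  unfold taylor_term, cis. simpl. split; repeat continuity_2d_step.
Qed.

Lemma continuity_2d_taylor_remainder (F : nat -> C -> C) rho s x y :
  is_derive_on_disk (F (S s)) (F (S (S s))) -> Rabs x < 1 ->
  continuity_2d_pt (fun u v => fst (taylor_remainder F rho s u v)) x y /\
  continuity_2d_pt (fun u v => snd (taylor_remainder F rho s u v)) x y.
Proof.
  intros HF Hx. destruct (continuity_2d_polar (F (S s)) (F (S (S s))) x y HF Hx).
  unfold taylor_remainder, cis. simpl. split; repeat continuity_2d_step.
Qed.

Lemma continuity_2d_taylor_poly (F : nat -> C -> C) rho n x y :
  (forall j, is_derive_on_disk (F j) (F (S j))) -> Rabs x < 1 ->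
  continuity_2d_pt (fun u v => fst (taylor_poly F rho n u v)) x y /\
  continuity_2d_pt (fun u v => snd (taylor_poly F rho n u v)) x y.
Proof.
  intros HF Hx. induction n as [|n [IHa IHb]].
  - simpl. split; apply continuity_2d_pt_const.
  - destruct (continuity_2d_taylor_term F rho n x y (HF n) Hx).
    simpl. split; apply continuity_2d_pt_plus; assumption.
Qed.

Lemma taylor_poly_at_rho (F : nat -> C -> C) rho N th :
  taylor_poly F rho (S N) rho th = F 0%nat (polar rho th).
Proof.
  induction N as [|N IH].
  - unfold taylor_poly, taylor_term, cis. simpl. rewrite Rmult_0_l, cos_0, sin_0.
    apply injective_projections; simpl; field.
  - change (taylor_poly F rho (S (S N)) rho th)
      with (taylor_poly F rho (S N) rho th + taylor_term F rho (S N) rho th)%C.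
    rewrite IH. unfold taylor_term. rewrite Rminus_eq_0, pow_i, Rdiv_0_l by lia.
    apply injective_projections; simpl; ring.
Qed.

Lemma circle_norm_taylor_poly (F : nat -> C -> C) rho r N :
  (forall j, is_derive_on_disk (F j) (F (S j))) -> Rabs r < 1 -> r <= rho ->
  circle_norm (taylor_poly F rho (S N) r) <=
    sum_f_R0 (fun s => (rho - r) ^ s / INR (Factorial.fact s) * Mmean2 (F s) r) N.
Proof.
  intros HF Hr Hrr.
  assert (Hterm : forall n, circle_norm (taylor_term F rho n r) =
    (rho - r) ^ n / INR (Factorial.fact n) * Mmean2 (F n) r).
  { intros n. unfold taylor_term.
    rewrite (circle_norm_scal_unimodular (fun v => F n (polar r v))) by
      (auto using Cmod_cis; exact (ex_RInt_sqmod _ _ r (HF n) Hr)).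
    f_equal. apply Rabs_pos_eq. apply Rmult_le_pos; [apply pow_le; lra|].
    apply Rlt_le, Rinv_0_lt_compat, INR_fact_lt_0. }
  induction N as [|N IH].
  - cbn [taylor_poly sum_f_R0]. rewrite <- Hterm. apply Req_le. unfold circle_norm. do 2 f_equal.
    apply RInt_ext. intros v _. rewrite Cplus_0_l. reflexivity.
  - cbn [taylor_poly sum_f_R0]. eapply Rle_trans; [apply circle_norm_triangle|].
    + apply (ex_RInt_of_continuity_2d (fun u v => _) r); intros th _.
      destruct (continuity_2d_taylor_poly F rho (S N) r th HF Hr). repeat continuity_2d_step.
    + apply (ex_RInt_of_continuity_2d (fun u v => _) r); intros th _.
      destruct (continuity_2d_taylor_term F rho (S N) r th (HF (S N)) Hr). repeat continuity_2d_step.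
    + apply (ex_RInt_of_continuity_2d (fun u v => _) r); intros th _.
      destruct (continuity_2d_taylor_poly F rho (S N) r th HF Hr).
      destruct (continuity_2d_taylor_term F rho (S N) r th (HF (S N)) Hr). repeat continuity_2d_step.
    + rewrite Hterm. apply Rplus_le_compat_r. exact IH.
Qed.

Lemma Mmean2_taylor_bound (F : nat -> C -> C) N rho r (B dB : R -> R) :
  (forall j, is_derive_on_disk (F j) (F (S j))) -> 0 < r <= rho -> rho < 1 ->
  (forall t, r <= t <= rho -> is_derive B t (dB t) /\
     (rho - t) ^ N / INR (Factorial.fact N) * Mmean2 (F (S N)) t <= dB t) ->
  Mmean2 (F 0%nat) rho <=
    sum_f_R0 (fun s => (rho - r) ^ s / INR (Factorial.fact s) * Mmean2 (F s) r) N + (B rho - B r).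
Proof.
  intros HF Hr Hrho HB.
  assert (E : Mmean2 (F 0%nat) rho = circle_norm (taylor_poly F rho (S N) rho)).
  { unfold Mmean2, circle_norm. do 2 f_equal. apply RInt_ext. intros th _.
    rewrite taylor_poly_at_rho. reflexivity. }
  rewrite E. eapply Rle_trans.
  - apply (circle_norm_variation (taylor_poly F rho (S N)) (taylor_remainder F rho N) B dB
      (-1) 1 r rho);
      [lra | lra | intros t th Ht .. | intros t Ht];
      try assert (Hta : Rabs t < 1) by (apply Rabs_lt_between; lra).
    + apply is_derive_taylor_poly; auto.
    + destruct (continuity_2d_taylor_poly F rho (S N) t th HF Hta).
      destruct (continuity_2d_taylor_remainder F rho N t th (HF (S N)) Hta). auto.
    + destruct (HB t Ht) as [D1 D2]. split; [exact D1|]. eapply Rle_trans; [|exact D2].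
      right. unfold taylor_remainder.
      rewrite (circle_norm_scal_unimodular (fun v => F (S N) (polar t v)))
        by (auto using Cmod_cis; exact (ex_RInt_sqmod _ _ t (HF (S N)) Hta)).
      f_equal. apply Rabs_pos_eq. apply Rmult_le_pos; [apply pow_le; lra|].
      apply Rlt_le, Rinv_0_lt_compat, INR_fact_lt_0.
  - apply Rplus_le_compat_r, circle_norm_taylor_poly; [auto | apply Rabs_lt_between; lra | lra].
Qed.

(* A primitive of [t |-> e^{-a (rho - t)} (rho - t)^n / n!], obtained by repeated
   integration by parts. *)
Fixpoint exp_moment_primitive (a rho : R) (n : nat) (t : R) : R :=
  match n with
  | O => exp (- a * (rho - t)) / a
  | S n => (exp_moment_primitive a rho n t
            + exp (- a * (rho - t)) * (rho - t) ^ S n / INR (Factorial.fact (S n))) / a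
  end.

Lemma is_derive_exp_moment_primitive a rho n t : 0 < a ->
  is_derive (exp_moment_primitive a rho n) t
    (exp (- a * (rho - t)) * (rho - t) ^ n / INR (Factorial.fact n)).
Proof.
  intros Ha. induction n as [|n IH]; cbn [exp_moment_primitive].
  - eapply is_derive_eq; [repeat derive_step|]. simpl. field. lra.
  - eapply is_derive_eq; [repeat derive_step|].
    rewrite fact_simpl, mult_INR. cbn [pred]. rewrite S_INR.
    field. split; [apply INR_fact_neq_0 | split; [pose proof (pos_INR n) |]; lra].
Qed.

Lemma exp_moment_primitive_at_rho a rho n : 0 < a ->
  exp_moment_primitive a rho n rho = / a ^ S n.
Proof.
  intros Ha. induction n as [|n IH]; cbn [exp_moment_primitive].
  - rewrite Rminus_eq_0, Rmult_0_r, exp_0. simpl. field. lra.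
  - rewrite IH, Rminus_eq_0, pow_i, Rmult_0_r, Rdiv_0_l by lia.
    simpl pow. field. split; [apply pow_nonzero|]; lra.
Qed.

Lemma exp_moment_primitive_ge0 a rho n t : 0 < a -> t <= rho -> 0 <= exp_moment_primitive a rho n t.
Proof.
  intros Ha Ht. induction n as [|n IH]; cbn [exp_moment_primitive];
    apply Rmult_le_pos; try (apply Rlt_le, Rinv_0_lt_compat; lra).
  - apply Rlt_le, exp_pos.
  - apply Rplus_le_le_0_compat; [exact IH|].
    apply Rmult_le_pos; [apply Rmult_le_pos; [apply Rlt_le, exp_pos | apply pow_le; lra]|].
    apply Rlt_le, Rinv_0_lt_compat, INR_fact_lt_0.
Qed.

Lemma Mmean2_le_of_Mradial1_le G (c : R) : Rbar_le (Mradial1 G) c ->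
  forall y, 0 <= y < 1 -> Mmean2 G y <= c.
Proof.
  intros Hb y Hy.
  destruct (Lub_Rbar_correct (fun x => exists r, 0 <= r < 1 /\ x = Mmean2 G r)) as [Hub _].
  exact (Rbar_le_trans _ _ _ (Hub (Mmean2 G y) (ex_intro _ y (conj Hy eq_refl))) Hb).
Qed.

Lemma H2norm_le_of_Mmean2_le f B : (forall rho, 0 <= rho < 1 -> Mmean2 f rho <= B) ->
  H2norm f <= B.
Proof.
  intros H. unfold H2norm, Mradial1.
  destruct (Lub_Rbar_correct (fun x => exists r, 0 <= r < 1 /\ x = Mmean2 f r)) as [Hub Hlub].
  assert (Hle : Rbar_le (Lub_Rbar (fun x => exists r, 0 <= r < 1 /\ x = Mmean2 f r)) B).
  { apply Hlub. intros x [rho [Hrho ->]]. apply H. exact Hrho. }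
  pose proof (Hub (Mmean2 f 0) (ex_intro _ 0 (conj (conj (Rle_refl 0) Rlt_0_1) eq_refl))) as H0.
  destruct (Lub_Rbar (fun x => exists r, 0 <= r < 1 /\ x = Mmean2 f r)); easy.
Qed.

Lemma Mmean2_eq_on_disk f g rho : (forall z, Cmod z < 1 -> f z = g z) -> 0 <= rho < 1 ->
  Mmean2 f rho = Mmean2 g rho.
Proof.
  intros Hfg Hrho. unfold Mmean2. do 2 f_equal. apply RInt_ext. intros t _.
  rewrite Hfg; [reflexivity|]. change (Cmod (polar rho t) < 1).
  rewrite Cmod_polar. apply Rabs_lt_between; lra.
Qed.

Lemma Mmean2_nondecreasing G0 G1 G2 G3 x y :
  is_derive_on_disk G0 G1 -> is_derive_on_disk G1 G2 -> is_derive_on_disk G2 G3 ->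
  0 <= x <= y -> y < 1 -> Mmean2 G0 x <= Mmean2 G0 y.
Proof.
  intros Ha Hb Hc Hxy Hy. rewrite !Mmean2_eq. apply sqrt_le_1_alt.
  apply Rmult_le_compat_l; [apply Rlt_le, Rinv_0_lt_compat, PI2_gt0|].
  apply (circle_energy_nondecreasing G0 G1 G2 G3); auto.
Qed.

Lemma Mmean2_three_circles G0 G1 G2 G3 r t :
  is_derive_on_disk G0 G1 -> is_derive_on_disk G1 G2 -> is_derive_on_disk G2 G3 ->
  0 < r <= t -> t < 1 -> (forall y, 0 <= y < 1 -> Mmean2 G0 y <= 1) ->
  (Mmean2 G0 r = 0 -> Mmean2 G0 t = 0) /\
  (0 < Mmean2 G0 r -> Mmean2 G0 t <= exp (ln t / ln r * ln (Mmean2 G0 r))).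
Proof.
  intros Ha Hb Hc Hr Ht HM. pose proof PI2_gt0.
  assert (Hc0 : 0 < / (2 * PI)) by (apply Rinv_0_lt_compat; lra).
  set (u := circle_energy G0).
  assert (Hu : forall y, 0 <= y < 1 -> 0 <= / (2 * PI) * u y)
    by (intros y Hy; apply Rmult_le_pos; [lra | apply (circle_energy_ge0 G0 G1); auto;
      apply Rabs_lt_between; lra]).
  assert (HL : forall y, 0 <= y < 1 -> u y <= 2 * PI).
  { intros y Hy. specialize (HM y Hy). rewrite Mmean2_eq in HM. fold u in HM.
    rewrite <- sqrt_1 in HM. apply sqrt_le_0 in HM; [|apply Hu; auto | lra].
    apply Rmult_le_reg_l with (/ (2 * PI)); [lra|]. rewrite Rinv_l; lra. }
  destruct (circle_energy_three_circles G0 G1 G2 G3 r t (2 * PI) Ha Hb Hc Hr Ht H HL) as [T0 T1].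
  fold u in T0, T1. rewrite !Mmean2_eq. fold u. split.
  - intros E. rewrite T0; [rewrite Rmult_0_r; apply sqrt_0|].
    apply sqrt_eq_0 in E; [|apply Hu; lra]. apply Rmult_integral in E. lra.
  - intros Hpos. assert (Hur : 0 < u r).
    { destruct (Rle_lt_or_eq_dec _ _ (Hu r ltac:(lra))) as [P|P]; [nra|].
      rewrite <- P, sqrt_0 in Hpos. lra. }
    specialize (T1 Hur).
    rewrite ln_sqrt, ln_mult, ln_Rinv by (try apply Rmult_lt_0_compat; lra).
    rewrite <- (sqrt_Rsqr (exp _)) by (apply Rlt_le, exp_pos). apply sqrt_le_1_alt.
    unfold Rsqr. rewrite <- exp_plus.
    rewrite <- (exp_ln (/ (2 * PI))) at 1 by lra. rewrite ln_Rinv by lra.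
    eapply Rle_trans; [apply Rmult_le_compat_l; [apply Rlt_le, exp_pos | exact T1]|].
    rewrite <- exp_plus. apply Req_le. f_equal. field. pose proof (ln_neg r ltac:(lra)). lra.
Qed.

Lemma Mmean2_exp_decay G0 G1 G2 G3 r t rho :
  is_derive_on_disk G0 G1 -> is_derive_on_disk G1 G2 -> is_derive_on_disk G2 G3 ->
  0 < r <= t -> t <= rho -> rho < 1 -> (forall y, 0 <= y < 1 -> Mmean2 G0 y <= 1) ->
  0 < Mmean2 G0 r ->
  Mmean2 G0 t <= exp (- (ln (Mmean2 G0 r) / ln r) * (rho - t)).
Proof.
  intros Ha Hb Hc Hr Ht Hrho HM Hpos.
  destruct (Mmean2_three_circles G0 G1 G2 G3 r t Ha Hb Hc Hr ltac:(lra) HM) as [_ T].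
  eapply Rle_trans; [exact (T Hpos)|]. apply exp_le.
  pose proof (ln_neg r ltac:(lra)).
  assert (ln (Mmean2 G0 r) <= 0) by (rewrite <- ln_1; apply ln_le; [|apply HM]; lra).
  assert (0 <= ln (Mmean2 G0 r) / ln r).
  { replace (ln (Mmean2 G0 r) / ln r) with ((- ln (Mmean2 G0 r)) / (- ln r)) by (field; lra).
    apply Rmult_le_pos; [lra | apply Rlt_le, Rinv_0_lt_compat; lra]. }
  pose proof (ln_le_sub_1 t ltac:(lra)).
  replace (ln t / ln r * ln (Mmean2 G0 r)) with (ln (Mmean2 G0 r) / ln r * ln t) by (field; lra).
  nra.
Qed.

Lemma log_term_nonneg k r m : 0 < r < 1 -> 0 <= m < 1 -> 0 <= log_term k r m.
Proof.
  intros Hr Hm. unfold log_term. destruct (Req_EM_T m 0) as [|Z]; [lra|].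
  apply pow_le. pose proof (ln_neg r Hr). pose proof (ln_neg m ltac:(lra)).
  replace (ln r / ln m) with ((- ln r) / (- ln m)) by (field; lra).
  apply Rmult_le_pos; [lra | apply Rlt_le, Rinv_0_lt_compat; lra].
Qed.

Section Pointwise_bound.
Variables (N : nat) (F : nat -> C -> C) (r : R).
Hypothesis HF : forall j, is_derive_on_disk (F j) (F (S j)).
Hypothesis HM : forall y, 0 <= y < 1 -> Mmean2 (F (S N)) y <= 1.
Hypothesis Hr : 0 < r < 1.

Let taylor_sum (c : R) :=
  sum_f_R0 (fun s => c ^ s / INR (Factorial.fact s) * Mmean2 (F s) r) N.

Lemma Mmean2_le_outside rho : r < rho < 1 -> Mmean2 (F (S N)) r < 1 ->
  Mmean2 (F 0%nat) rho <= taylor_sum (rho - r) + log_term (S N) r (Mmean2 (F (S N)) r).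
Proof.
  intros Hrho Hm. set (m := Mmean2 (F (S N)) r) in *.
  assert (Hm0 : 0 <= m) by apply sqrt_pos.
  pose proof (HF (S N)); pose proof (HF (S (S N))); pose proof (HF (S (S (S N)))).
  destruct (Req_dec m 0) as [E0|Epos].
  - apply Rle_trans with (taylor_sum (rho - r) + (0 - 0));
      [|apply Rplus_le_compat_l; rewrite Rminus_0_r; apply log_term_nonneg; lra].
    apply (Mmean2_taylor_bound F N rho r (fun _ => 0) (fun _ => 0)); [auto | lra | lra |].
    intros t Ht. split; [apply is_derive_Rconst|].
    destruct (Mmean2_three_circles (F (S N)) (F (S (S N))) (F (S (S (S N))))
      (F (S (S (S (S N))))) r t) as [T _]; auto; try lra.
    rewrite (T E0), Rmult_0_r. lra.
  - assert (Hmpos : 0 < m) by (destruct Hm0; [auto | congruence]).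
    set (a := ln m / ln r).
    assert (Ha : 0 < a).
    { pose proof (ln_neg r Hr). pose proof (ln_neg m ltac:(lra)). unfold a.
      replace (ln m / ln r) with ((- ln m) / (- ln r)) by (field; lra).
      apply Rdiv_lt_0_compat; lra. }
    eapply Rle_trans; [apply (Mmean2_taylor_bound F N rho r (exp_moment_primitive a rho N)
      (fun t => exp (- a * (rho - t)) * (rho - t) ^ N / INR (Factorial.fact N))); auto; try lra|].
    + intros t Ht. split; [apply is_derive_exp_moment_primitive; auto|].
      rewrite Rmult_comm. unfold Rdiv. rewrite Rmult_assoc.
      apply Rmult_le_compat_r;
        [apply Rmult_le_pos; [apply pow_le; lra | apply Rlt_le, Rinv_0_lt_compat, INR_fact_lt_0]|].
      apply (Mmean2_exp_decay (F (S N)) (F (S (S N))) (F (S (S (S N))))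
        (F (S (S (S (S N))))) r t rho); auto; lra.
    + apply Rplus_le_compat_l. rewrite exp_moment_primitive_at_rho by exact Ha.
      pose proof (exp_moment_primitive_ge0 a rho N r Ha ltac:(lra)).
      unfold log_term. destruct (Req_EM_T m 0) as [|_]; [lra|].
      replace (ln r / ln m) with (/ a) by (unfold a; field; split; apply Rlt_not_eq, ln_neg; lra).
      rewrite pow_inv. lra.
Qed.

Lemma Mmean2_le_taylor_log_bound rho : 0 <= rho < 1 -> Mmean2 (F (S N)) r < 1 ->
  Mmean2 (F 0%nat) rho <= taylor_sum (1 - r) + log_term (S N) r (Mmean2 (F (S N)) r).
Proof.
  intros Hrho Hm.
  assert (HL : 0 <= log_term (S N) r (Mmean2 (F (S N)) r)) by (apply log_term_nonneg; auto;
    split; [apply sqrt_pos | exact Hm]).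
  assert (Hmono : forall c c', 0 <= c <= c' -> taylor_sum c <= taylor_sum c').
  { intros c c' Hc. apply sum_growing. intros s. apply Rmult_le_compat_r; [apply sqrt_pos|].
    apply Rmult_le_compat_r; [apply Rlt_le, Rinv_0_lt_compat, INR_fact_lt_0|].
    apply pow_incr. lra. }
  destruct (Rle_dec rho r) as [Hle|Hgt].
  - apply Rle_trans with (Mmean2 (F 0%nat) r);
      [apply (Mmean2_nondecreasing (F 0%nat) (F 1%nat) (F 2%nat) (F 3%nat)); auto; lra|].
    apply Rle_trans with (taylor_sum (1 - r)); [|lra].
    unfold taylor_sum. eapply Rle_trans; [|apply sum_f_R0_ge_first].
    + simpl. lra.
    + intros s. apply Rmult_le_pos; [|apply sqrt_pos]. apply Rmult_le_pos; [apply pow_le; lra|].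
      apply Rlt_le, Rinv_0_lt_compat, INR_fact_lt_0.
  - eapply Rle_trans; [apply Mmean2_le_outside; auto; lra|].
    apply Rplus_le_compat_r, Hmono. lra.
Qed.

End Pointwise_bound.

Theorem lemma4 (k : nat) (f : C -> C) (F : nat -> C -> C) :
  (1 <= k)%nat ->
  in_Hk2 k f F ->
  Rbar_le (Mradial1 (F k)) 1 ->
  forall r : R, 0 < r < 1 ->
  Mmean2 (F k) r < 1 ->
  H2norm f <=
    sum_f_R0 (fun s => (1 - r) ^ s / INR (Factorial.fact s) * Mmean2 (F s) r) (pred k)
    + log_term k r (Mmean2 (F k) r).
Proof.
  intros Hk [[Hf0 HFd] _] Hb r Hr Hm.
  destruct k as [|N]; [lia|].
  assert (HF : forall j, is_derive_on_disk (F j) (F (S j))) by (intros j z; apply HFd).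
  apply H2norm_le_of_Mmean2_le. intros rho Hrho.
  rewrite (Mmean2_eq_on_disk f (F 0%nat) rho) by (auto; intros; symmetry; auto).
  apply Mmean2_le_taylor_log_bound; auto.
  apply Mmean2_le_of_Mradial1_le. exact Hb.
Qed.
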